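(* Suppose $(C,\mathbf A)$ (state space $\mathcal X$) and $(\widetilde C,\widetilde{\mathbf A})$ (state space $\widetilde{\mathcal X}$), with common output space $\mathcal Y$, are two observable output-stable pairs with both $\mathbf A$ and $\widetilde{\mathbf A}$ commutative, such that $K^{\mathbf a}_{C,\mathbf A}(\boldsymbol\lambda,\boldsymbol\zeta)=K^{\mathbf a}_{\widetilde C,\widetilde{\mathbf A}}(\boldsymbol\lambda,\boldsymbol\zeta)$ for all $\boldsymbol\lambda,\boldsymbol\zeta\in\mathbb B^d$. Then there is a unitary $U\colon\mathcal X\to\widetilde{\mathcal X}$ with $C=\widetilde CU$ and $A_j=U^{-1}\widetilde A_jU$ for $j=1,\dots,d$.
   Context: $\mathbb B^d$: open unit ball of $\mathbb C^d$. $\mathcal F_d$: free semigroup of words on $\{1,\dots,d\}$, $\mathbf A^v=A_{i_N}\cdots A_{i_1}$ for $v=i_N\cdots i_1$. $(C,\mathbf A)$ is output-stable if $x\mapsto\{C\mathbf A^vx\}_{v\in\mathcal F_d}$ is bounded from $\mathcal X$ into $\ell^2_{\mathcal Y}(\mathcal F_d)$, and observable if $C\mathbf A^vx=0$ for all $v$ implies $x=0$. For commutative $\mathbf A$ and $\mathbf n\in\mathbb Z^d_+$, $\mathbf A^{\mathbf n}=A_1^{n_1}\cdots A_d^{n_d}$, $|\mathbf n|=\sum n_k$, $\mathbf n!=\prod n_k!$, $\boldsymbol\lambda^{\mathbf n}=\prod\lambda_k^{n_k}$. For $\boldsymbol\lambda\in\mathbb B^d$ let $E(\boldsymbol\lambda)\colon\mathcal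 X\to\mathcal Y$, $E(\boldsymbol\lambda)x=\sum_{\mathbf n}\frac{|\mathbf n|!}{\mathbf n!}C\mathbf A^{\mathbf n}x\,\boldsymbol\lambda^{\mathbf n}$ (i.e. $C(I-\sum_j\lambda_jA_j)^{-1}x$), and $K^{\mathbf a}_{C,\mathbf A}(\boldsymbol\lambda,\boldsymbol\zeta)=E(\boldsymbol\lambda)E(\boldsymbol\zeta)^*=C(I-\sum_j\lambda_jA_j)^{-1}(I-\sum_j\overline{\zeta_j}A_j^* )^{-1}C^*$; similarly for $(\widetilde C,\widetilde{\mathbf A})$. *)

From HB Require Import structures.
From mathcomp Require Import all_boot all_order all_algebra.
From mathcomp Require Export complex reals.
Set Implicit Arguments. Unset Strict Implicit. Unset Printing Implicit Defensive.
Import Order.TTheory GRing.Theory Num.Theory.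
Local Open Scope ring_scope.

Section Hilbert.
Variable R : realType.
Local Notation C := R[i].

Record hilbert (V : lmodType C) := Hilbert {
  inner : V -> V -> C;
  inner_linear : forall (a : C) (x1 x2 y : V),
    inner (a *: x1 + x2) y = a * inner x1 y + inner x2 y;
  inner_conj : forall x y : V, inner y x = ((inner x y)^*)%C;
  inner_ge0 : forall x : V, 0 <= inner x x;
  inner_eq0 : forall x : V, inner x x = 0 -> x = 0;
  inner_complete : forall u : nat -> V,
    (forall e : R, 0 < e -> exists N, forall m n, (N <= m)%N -> (N <= n)%N ->
        Num.sqrt (complex.Re (inner (u m - u n) (u m - u n))) < e) ->
    exists l : V, forall e : R, 0 < e -> exists N, forall n, (N <= n)%N ->
        Num.sqrt (complex.Re (inner (u n - l) (u n - l))) < e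
}.

Definition hnorm (V : lmodType C) (H : hilbert V) (x : V) : R :=
  Num.sqrt (complex.Re (inner H x x)).

Definition hconverges (V : lmodType C) (H : hilbert V) (u : nat -> V) (l : V) :=
  forall e : R, 0 < e -> exists N, forall n, (N <= n)%N -> hnorm H (u n - l) < e.

Definition is_linear (V W : lmodType C) (T : V -> W) :=
  forall (a : C) (x y : V), T (a *: x + y) = a *: T x + T y.

Definition bounded_op (V W : lmodType C) (HV : hilbert V) (HW : hilbert W) (T : V -> W) :=
  is_linear T /\ exists M : R, forall x, hnorm HW (T x) <= M * hnorm HV x.

Definition is_adjoint (V W : lmodType C) (HV : hilbert V) (HW : hilbert W)
  (T : V -> W) (S : W -> V) :=
  forall x y, inner HW (T x) y = inner HV x (S y).

(* A^v for a word v = i_N ... i_1, represented as the sequence [:: i_N; ...; i_1] *)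
Definition apply_word (d : nat) (V : lmodType C) (A : 'I_d -> V -> V) (v : seq 'I_d) : V -> V :=
  foldr (fun i f => A i \o f) id v.

(* output stability: x |-> (C A^v x)_{v in F_d} is bounded X -> l^2_Y(F_d);
   words of length k are k-tuples over 'I_d *)
Definition output_stable (d : nat) (X Y : lmodType C) (HX : hilbert X) (HY : hilbert Y)
  (Cop : X -> Y) (A : 'I_d -> X -> X) :=
  exists M : R, forall (x : X) (N : nat),
    \sum_(k < N) \sum_(v : k.-tuple 'I_d) hnorm HY (Cop (apply_word A v x)) ^+ 2
      <= M * hnorm HX x ^+ 2.

Definition observable (d : nat) (X Y : lmodType C) (Cop : X -> Y) (A : 'I_d -> X -> X) :=
  forall x : X, (forall v : seq 'I_d, Cop (apply_word A v x) = 0) -> x = 0.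

Definition commutative_tuple (d : nat) (X : lmodType C) (A : 'I_d -> X -> X) :=
  forall i j x, A i (A j x) = A j (A i x).

Definition in_ball (d : nat) (l : 'I_d -> C) := \sum_(j < d) `|l j| ^+ 2 < 1.

Definition apow (d : nat) (X : lmodType C) (A : 'I_d -> X -> X) (n : 'I_d -> nat) (x : X) : X :=
  foldr (fun j z => iter (n j) (A j) z) x (enum 'I_d).

(* homogeneous part of degree k of the series E(lambda) x:
   sum over multi-indices n with |n| = k of |n|!/n! C A^n x lambda^n *)
Definition E_hom (d : nat) (X Y : lmodType C) (Cop : X -> Y) (A : 'I_d -> X -> X)
  (l : 'I_d -> C) (k : nat) (x : X) : Y :=
  \sum_(n : {ffun 'I_d -> 'I_k.+1} | (\sum_(j < d) (n j : nat) == k)%N)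
     ((k`!)%:R / (\prod_(j < d) (n j)`!)%:R * \prod_(j < d) l j ^+ n j)
       *: Cop (apow A (fun j => (n j : nat)) x).

(* E is the map lambda |-> E(lambda): its value at x is the norm limit of
   the partial sums of the series (ordered by total degree) *)
Definition is_E (d : nat) (X Y : lmodType C) (HY : hilbert Y) (Cop : X -> Y)
  (A : 'I_d -> X -> X) (E : ('I_d -> C) -> X -> Y) :=
  forall l, in_ball l -> forall x,
    hconverges HY (fun N => \sum_(k < N) E_hom Cop A l k x) (E l x).

End Hilbert.

From Pilot Require Import Defs.
From mathcomp Require Import all_boot all_order all_algebra complex reals.
From mathcomp Require Import ring lra zify.
From mathcomp Require Import boolp classical_sets.
Import Order.TTheory GRing.Theory Num.Theory.

(* The transfer function [E(l) = C (1 - l.A)^-1] is the sum of the series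
   [sum_k C (l.A)^k], which output stability makes converge on the unit ball.
   The kernel identity says that the families [E(z)^* y] and [Et(z)^* y], indexed
   by [z] in the ball and [y] in [Y], have the same Gram matrix, and observability
   makes both of them total; hence [E(z)^* y |-> Et(z)^* y] extends to a unitary
   [U] with [E(l) = Et(l) U].  Comparing the power series in [l] gives
   [C (l.A)^k x = Ct (l.At)^k (U x)]; differentiating in [l_j], which is where
   commutativity is used, gives the same identity for [A_j x] and [At_j (U x)],
   so [U A_j x - At_j U x] is unobservable, hence zero.  At [l = 0], [C = Ct U]. *)

Set Implicit Arguments. Unset Strict Implicit. Unset Printing Implicit Defensive.
Local Open Scope ring_scope.
Local Open Scope complex_scope.

Section ComplexModulus.
Variable R : realType.
Implicit Types (a b c : R[i]) (r : R).

Definition cmod c : R := complex.Re `|c|.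

Lemma cmodE c : `|c| = (cmod c)%:C.
Proof. by rewrite /cmod normc_def. Qed.

Lemma cmod_ge0 c : 0 <= cmod c.
Proof. by rewrite -ler0c -cmodE. Qed.

Lemma cmod_sqrt c : cmod c = Num.sqrt (complex.Re c ^+ 2 + complex.Im c ^+ 2).
Proof. by rewrite /cmod normc_def. Qed.

Lemma cmodM a b : cmod (a * b) = cmod a * cmod b.
Proof. by apply: (@complexI R); rewrite rmorphM -!cmodE normrM. Qed.

Lemma cmodD a b : cmod (a + b) <= cmod a + cmod b.
Proof. by rewrite -lecR rmorphD -!cmodE ler_normD. Qed.

Lemma cmodN a : cmod (- a) = cmod a.
Proof. by rewrite /cmod normrN. Qed.

Lemma cmod_eq0 a : cmod a = 0 -> a = 0.
Proof. by move=> a0; apply/normr0_eq0; rewrite cmodE a0. Qed.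

Lemma cmod0 : cmod 0 = 0.
Proof. by rewrite /cmod normr0. Qed.

Lemma cmodR r : cmod r%:C = `|r|.
Proof. by rewrite cmod_sqrt /= expr0n addr0 sqrtr_sqr. Qed.

Lemma cmod_nat n : cmod n%:R = n%:R.
Proof. by rewrite -(rmorph_nat (real_complex R)) cmodR ger0_norm. Qed.

Lemma Re_le_cmod c : complex.Re c <= cmod c.
Proof.
rewrite cmod_sqrt; apply: le_trans (ler_norm _) _; rewrite -sqrtr_sqr ler_sqrt.
  by rewrite lerDl sqr_ge0.
by rewrite addr_ge0 // sqr_ge0.
Qed.

Lemma mulcJ_cmod c : c * c^*%C = (cmod c ^+ 2)%:C.
Proof. by rewrite -sqr_normc cmodE rmorphXn. Qed.

Lemma conjc_realM r c : ((r%:C * c)^*)%C = r%:C * c^*%C.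
Proof. by case: c => a b /=; congr (_ +i* _); ring. Qed.

Lemma ReD a b : complex.Re (a + b) = complex.Re a + complex.Re b.
Proof. by case: a; case: b. Qed.

Lemma ReN a : complex.Re (- a) = - complex.Re a.
Proof. by case: a. Qed.

Lemma ReJ c : complex.Re c^*%C = complex.Re c.
Proof. by case: c. Qed.

Lemma ge0_complex_real c : 0 <= c -> c = (complex.Re c)%:C.
Proof. by case: c => a b; rewrite lecE /= => /andP[/eqP -> _]. Qed.

End ComplexModulus.

(** * Inner products, norms and norm convergence *)

Section InnerProduct.
Variables (R : realType) (V : lmodType R[i]) (H : hilbert V).
Implicit Types (a : R[i]) (x y z : V).
Local Notation inner := (inner H).
Local Notation hnorm := (hnorm H).

Lemma innerDl x y z : inner (x + y) z = inner x z + inner y z.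
Proof. by have := inner_linear H 1 x y z; rewrite scale1r mul1r. Qed.

Lemma inner0l z : inner 0 z = 0.
Proof. by apply: (addrI (inner 0 z)); rewrite -innerDl !addr0. Qed.

Lemma innerZl a x z : inner (a *: x) z = a * inner x z.
Proof. by have := inner_linear H a x 0 z; rewrite addr0 inner0l addr0. Qed.

Lemma innerNl x z : inner (- x) z = - inner x z.
Proof. by rewrite -scaleN1r innerZl mulN1r. Qed.

Lemma innerBl x y z : inner (x - y) z = inner x z - inner y z.
Proof. by rewrite innerDl innerNl. Qed.

Lemma innerDr x y z : inner x (y + z) = inner x y + inner x z.
Proof. by rewrite inner_conj innerDl rmorphD /= -!inner_conj. Qed.

Lemma inner0r x : inner x 0 = 0.
Proof. by rewrite inner_conj inner0l conjc0. Qed.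

Lemma innerZr a x y : inner x (a *: y) = a^*%C * inner x y.
Proof. by rewrite inner_conj innerZl rmorphM /= -inner_conj. Qed.

Lemma innerNr x y : inner x (- y) = - inner x y.
Proof. by rewrite inner_conj innerNl rmorphN /= -inner_conj. Qed.

Lemma innerBr x y z : inner x (y - z) = inner x y - inner x z.
Proof. by rewrite innerDr innerNr. Qed.

Lemma inner_suml I (r : seq I) (P : pred I) (F : I -> V) z :
  inner (\sum_(i <- r | P i) F i) z = \sum_(i <- r | P i) inner (F i) z.
Proof. exact: (big_morph (inner^~ z) (fun x y => innerDl x y z) (inner0l z)). Qed.

Lemma inner_sumr I (r : seq I) (P : pred I) (F : I -> V) z :
  inner z (\sum_(i <- r | P i) F i) = \sum_(i <- r | P i) inner z (F i).
Proof. exact: (big_morph (inner z) (innerDr z) (inner0r z)). Qed.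

Definition hsqnorm x := complex.Re (inner x x).

Lemma inner_self x : inner x x = (hsqnorm x)%:C.
Proof. exact/ge0_complex_real/inner_ge0. Qed.

Lemma hsqnorm_ge0 x : 0 <= hsqnorm x.
Proof. by rewrite -ler0c -inner_self inner_ge0. Qed.

Lemma hsqnorm_eq0 x : hsqnorm x = 0 -> x = 0.
Proof. by move=> x0; apply: (@inner_eq0 _ _ H); rewrite inner_self x0. Qed.

Lemma hsqnormN x : hsqnorm (- x) = hsqnorm x.
Proof. by rewrite /hsqnorm innerNl innerNr opprK. Qed.

Lemma hsqnormD x y :
  hsqnorm (x + y) = hsqnorm x + hsqnorm y + 2%:R * complex.Re (inner x y).
Proof. by rewrite /hsqnorm innerDl !innerDr (inner_conj H y x) !ReD ReJ; lra. Qed.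

Lemma hsqnormB x y :
  hsqnorm (x - y) = hsqnorm x + hsqnorm y - 2%:R * complex.Re (inner x y).
Proof. by rewrite hsqnormD hsqnormN innerNr ReN mulrN. Qed.

Lemma hsqnormZ a x : hsqnorm (a *: x) = cmod a ^+ 2 * hsqnorm x.
Proof. by rewrite /hsqnorm innerZl innerZr mulrA mulcJ_cmod inner_self -rmorphM. Qed.

Lemma hsqnorm_parallelogram x y :
  hsqnorm (x - y) + hsqnorm (x + y) = 2%:R * hsqnorm x + 2%:R * hsqnorm y.
Proof. by rewrite hsqnormB hsqnormD; lra. Qed.

Lemma hnorm_ge0 x : 0 <= hnorm x.
Proof. exact: sqrtr_ge0. Qed.

Lemma sqr_hnorm x : hnorm x ^+ 2 = hsqnorm x.
Proof. by rewrite sqr_sqrtr // hsqnorm_ge0. Qed.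

Lemma hnorm_eq0 x : hnorm x = 0 -> x = 0.
Proof.
by move=> /eqP; rewrite sqrtr_eq0 => x0; apply/hsqnorm_eq0/eqP; rewrite eq_le x0 hsqnorm_ge0.
Qed.

Lemma hnorm_le_eq0 x : (forall e : R, 0 < e -> hnorm x <= e) -> x = 0.
Proof.
move=> x_le; apply: hnorm_eq0; apply/eqP; rewrite eq_le hnorm_ge0 andbT.
by apply/ler_addgt0Pr => e e0; rewrite add0r x_le.
Qed.

Lemma hnorm0 : hnorm 0 = 0.
Proof. by rewrite /Defs.hnorm inner0l sqrtr0. Qed.

Lemma hnorm_lt x (e : R) : 0 < e -> hsqnorm x < e ^+ 2 -> hnorm x < e.
Proof. by move=> e0 xe; rewrite -(ger0_norm (ltW e0)) -sqrtr_sqr ltr_sqrt // exprn_gt0. Qed.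

Lemma hnormZ a x : hnorm (a *: x) = cmod a * hnorm x.
Proof.
by rewrite /Defs.hnorm -/(hsqnorm _) hsqnormZ sqrtrM ?sqr_ge0 // sqrtr_sqr ger0_norm ?cmod_ge0.
Qed.

Lemma hnormN x : hnorm (- x) = hnorm x.
Proof. by rewrite /Defs.hnorm -!/(hsqnorm _) hsqnormN. Qed.

Lemma hnormBC x y : hnorm (x - y) = hnorm (y - x).
Proof. by rewrite -hnormN opprB. Qed.

Lemma cauchy_schwarz x y : cmod (inner x y) <= hnorm x * hnorm y.
Proof.
set c := inner x y.
have [y0|ny0] := eqVneq (hsqnorm y) 0.
  by rewrite /c (hsqnorm_eq0 y0) inner0r cmod0 mulr_ge0 ?hnorm_ge0.
have ny : 0 < hsqnorm y by rewrite lt_neqAle eq_sym ny0 hsqnorm_ge0.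
set s := (hsqnorm y)^-1.
have := hsqnorm_ge0 (x - (s%:C * c) *: y).
rewrite hsqnormB hsqnormZ innerZr conjc_realM -/c -mulrA.
rewrite [c^*%C * _]mulrC mulcJ_cmod -rmorphM cmodM cmodR ger0_norm ?invr_ge0 ?hsqnorm_ge0 //.
have -> : hsqnorm x + (s * cmod c) ^+ 2 * hsqnorm y - 2%:R * (s * cmod c ^+ 2)
       = hsqnorm x - cmod c ^+ 2 / hsqnorm y by rewrite /s; field.
rewrite subr_ge0 ler_pdivrMr // => h.
rewrite -(ger0_norm (cmod_ge0 c)) -sqrtr_sqr -sqrtrM ?hsqnorm_ge0 //.
by rewrite ler_sqrt // mulr_ge0 // hsqnorm_ge0.
Qed.

Lemma hnormD x y : hnorm (x + y) <= hnorm x + hnorm y.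
Proof.
rewrite -(ger0_norm (addr_ge0 (hnorm_ge0 x) (hnorm_ge0 y))) -sqrtr_sqr.
rewrite ler_sqrt ?sqr_ge0 // -/(hsqnorm _) hsqnormD sqrrD !sqr_hnorm.
by have := le_trans (Re_le_cmod (inner x y)) (cauchy_schwarz x y); lra.
Qed.

Lemma hnorm_distD x y z : hnorm (x - z) <= hnorm (x - y) + hnorm (y - z).
Proof. by have := hnormD (x - y) (y - z); rewrite addrA subrK. Qed.

Lemma hnorm_sum I (r : seq I) (P : pred I) (F : I -> V) :
  hnorm (\sum_(i <- r | P i) F i) <= \sum_(i <- r | P i) hnorm (F i).
Proof.
elim/big_rec2: _ => [|i y1 y2 _ h]; first by rewrite hnorm0.
by apply: le_trans (hnormD _ _) _; rewrite lerD2l.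
Qed.

End InnerProduct.

Section LinearMaps.
Variables (R : realType) (V W : lmodType R[i]) (T : V -> W).
Hypothesis linT : is_linear T.

Lemma is_linear0 : T 0 = 0.
Proof. by apply: (addrI (T 0)); have := linT 1 0 0; rewrite !scale1r !addr0. Qed.

Lemma is_linearD x y : T (x + y) = T x + T y.
Proof. by have := linT 1 x y; rewrite !scale1r. Qed.

Lemma is_linearZ a x : T (a *: x) = a *: T x.
Proof. by have := linT a x 0; rewrite !addr0 is_linear0 addr0. Qed.

Lemma is_linearB x y : T (x - y) = T x - T y.
Proof. by rewrite is_linearD -scaleN1r is_linearZ scaleN1r. Qed.

Lemma is_linear_sum I (r : seq I) (P : pred I) (F : I -> V) :
  T (\sum_(i <- r | P i) F i) = \sum_(i <- r | P i) T (F i).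
Proof. exact: (big_morph T is_linearD is_linear0). Qed.

End LinearMaps.

Section RealFacts.
Variable R : realType.

Lemma half_gt0 (e : R) : 0 < e -> 0 < e / 2%:R.
Proof. by move=> e0; rewrite divr_gt0 ?ltr0n. Qed.

Lemma archi_invS (e : R) : 0 < e -> exists N, forall n, (N <= n)%N -> n.+1%:R^-1 < e.
Proof.
move=> e0; exists (Num.bound e^-1) => n Nn.
have ei : 0 < e^-1 by rewrite invr_gt0.
rewrite -[e]invrK ltf_pV2 ?posrE ?ltr0Sn //.
by apply: lt_le_trans (archi_boundP (ltW ei)) _; rewrite ler_nat leqW.
Qed.

Lemma sqrtrD_le (a b : R) : 0 <= a -> 0 <= b -> Num.sqrt (a + b) <= Num.sqrt a + Num.sqrt b.
Proof.
move=> a0 b0; rewrite -(ger0_norm (addr_ge0 (sqrtr_ge0 a) (sqrtr_ge0 b))) -sqrtr_sqr.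
rewrite ler_sqrt ?sqr_ge0 // sqrrD !sqr_sqrtr //.
by have := mulr_ge0 (sqrtr_ge0 a) (sqrtr_ge0 b); lra.
Qed.

End RealFacts.

Section NormConvergence.
Variables (R : realType) (V : lmodType R[i]) (H : hilbert V).
Implicit Types (u w : nat -> V) (l m : V).
Local Notation hnorm := (hnorm H).
Local Notation hcvg := (hconverges H).

Lemma hcvg_unique u l l' : hcvg u l -> hcvg u l' -> l = l'.
Proof.
move=> ul ul'; apply/eqP; rewrite -subr_eq0; apply/eqP; apply: (@hnorm_le_eq0 _ _ H) => e e0.
have [N1 hN1] := ul _ (half_gt0 e0); have [N2 hN2] := ul' _ (half_gt0 e0).
have := hN1 (maxn N1 N2) (leq_maxl _ _); have := hN2 (maxn N1 N2) (leq_maxr _ _).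
have := hnorm_distD H l (u (maxn N1 N2)) l'; rewrite (hnormBC H l (u _)).
have : e / 2%:R + e / 2%:R = e by field.
lra.
Qed.

Lemma hcvgD u w l m : hcvg u l -> hcvg w m -> hcvg (fun n => u n + w n) (l + m).
Proof.
move=> ul wm e e0.
have [N1 hN1] := ul _ (half_gt0 e0); have [N2 hN2] := wm _ (half_gt0 e0).
exists (maxn N1 N2) => n Nn.
have := hN1 n (leq_trans (leq_maxl _ _) Nn); have := hN2 n (leq_trans (leq_maxr _ _) Nn).
rewrite opprD addrACA; have := hnormD H (u n - l) (w n - m).
have : e / 2%:R + e / 2%:R = e by field.
lra.
Qed.

Lemma hcvgZ a u l : hcvg u l -> hcvg (fun n => a *: u n) (a *: l).
Proof.
move=> ul e e0; have a1 : 0 < cmod a + 1 by rewrite ltr_wpDl ?cmod_ge0.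
have [N hN] := ul _ (divr_gt0 e0 a1); exists N => n Nn.
rewrite -scalerBr hnormZ; have := hN n Nn; rewrite ltr_pdivlMr // => h.
by apply: le_lt_trans h; rewrite mulrC ler_wpM2l ?hnorm_ge0 ?lerDl.
Qed.

Lemma hcvg_eq u w l : u =1 w -> hcvg u l -> hcvg w l.
Proof. by move=> /funext <-. Qed.

Lemma hcvgB u w l m : hcvg u l -> hcvg w m -> hcvg (fun n => u n - w n) (l - m).
Proof.
move=> ul /(hcvgZ (-1)) /(hcvgD ul); rewrite scaleN1r; apply: hcvg_eq => n.
by rewrite scaleN1r.
Qed.

Lemma hcvg_near_cst u l N : (forall n, (N <= n)%N -> u n = l) -> hcvg u l.
Proof. by move=> ul e e0; exists N => n Nn; rewrite ul // subrr hnorm0. Qed.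

Lemma hcvg_cst l : hcvg (fun=> l) l.
Proof. exact: (@hcvg_near_cst _ _ 0%N). Qed.

Lemma hcvg_hnorm_le u l B : hcvg u l -> (forall n, hnorm (u n) <= B) -> hnorm l <= B.
Proof.
move=> ul uB; apply/ler_addgt0Pr => e e0; have [N hN] := ul _ e0.
have := hN N (leqnn N); have := uB N; have := hnormD H (u N) (l - u N).
by rewrite addrC subrK (hnormBC H l); lra.
Qed.

Lemma hsqnorm_lim_le u l (d : R) : 0 <= d -> hcvg u l ->
  (forall n, hsqnorm H (u n) < d + n.+1%:R^-1) -> hsqnorm H l <= d.
Proof.
move=> d0 ul u_le; rewrite -sqr_hnorm -(sqr_sqrtr d0).
rewrite lerXn2r ?nnegrE ?hnorm_ge0 ?sqrtr_ge0 //; apply/ler_addgt0Pr => e e0.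
have [N1 hN1] := ul _ (half_gt0 e0); have [N2 hN2] := archi_invS (exprn_gt0 2 (half_gt0 e0)).
set n := maxn N1 N2; have eps0 : 0 <= n.+1%:R^-1 :> R by rewrite invr_ge0.
have := hN1 n (leq_maxl _ _); have := hnormD H (u n) (l - u n).
rewrite [u n + _]addrC subrK (hnormBC H l).
have : hnorm (u n) <= Num.sqrt d + Num.sqrt n.+1%:R^-1.
  apply: le_trans (sqrtrD_le d0 eps0); rewrite /Defs.hnorm ler_sqrt ?addr_ge0 //.
  exact: ltW (u_le n).
have : Num.sqrt n.+1%:R^-1 < e / 2%:R.
  rewrite -(ger0_norm (ltW (half_gt0 e0))) -sqrtr_sqr ltr_sqrt ?exprn_gt0 ?half_gt0 //.
  exact: hN2 (leq_maxr _ _).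
have : e / 2%:R + e / 2%:R = e by field.
lra.
Qed.

Lemma hcauchy_cvg u :
  (forall e : R, 0 < e -> exists N, forall i j, (N <= i)%N -> (N <= j)%N ->
     hnorm (u i - u j) < e) -> exists l, hcvg u l.
Proof. by move=> /inner_complete[l ul]; exists l. Qed.

Definition cconverges (c : nat -> R[i]) (z : R[i]) :=
  forall e : R, 0 < e -> exists N, forall n, (N <= n)%N -> cmod (c n - z) < e.

Lemma cconverges_unique c z z' : cconverges c z -> cconverges c z' -> z = z'.
Proof.
move=> cz cz'; apply/eqP; rewrite -subr_eq0; apply/eqP/cmod_eq0.
apply/eqP; rewrite eq_le cmod_ge0 andbT; apply/ler_addgt0Pr => e e0.
have [N1 hN1] := cz _ (half_gt0 e0); have [N2 hN2] := cz' _ (half_gt0 e0).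
have := hN1 (maxn N1 N2) (leq_maxl _ _); have := hN2 (maxn N1 N2) (leq_maxr _ _).
have := cmodD (z - c (maxn N1 N2)) (c (maxn N1 N2) - z').
rewrite addrA subrK -[z - c _]opprB cmodN add0r.
have : e / 2%:R + e / 2%:R = e by field.
lra.
Qed.

Lemma hcvg_inner u w l m :
  hcvg u l -> hcvg w m -> cconverges (fun n => inner H (u n) (w n)) (inner H l m).
Proof.
move=> ul wm e e0.
have [N0 hN0] := wm _ ltr01.
have B1 : 0 < hnorm m + 1 by rewrite ltr_wpDl ?hnorm_ge0.
have B2 : 0 < hnorm l + 1 by rewrite ltr_wpDl ?hnorm_ge0.
have [N1 hN1] := ul _ (divr_gt0 (half_gt0 e0) B1).
have [N2 hN2] := wm _ (divr_gt0 (half_gt0 e0) B2).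
exists (maxn N0 (maxn N1 N2)) => n; rewrite !geq_max => /and3P[n0 n1 n2].
have -> : inner H (u n) (w n) - inner H l m = inner H (u n - l) (w n) + inner H l (w n - m).
  by rewrite innerBl innerBr addrA subrK.
apply: le_lt_trans (cmodD _ _) _.
have c1 := cauchy_schwarz H (u n - l) (w n).
have c2 := cauchy_schwarz H l (w n - m).
have wB : hnorm (w n) <= hnorm m + 1.
  by have := hN0 n n0; have := hnormD H (w n - m) m; rewrite subrK; lra.
have t1 : hnorm (u n - l) * hnorm (w n) < e / 2%:R.
  have := hN1 n n1; rewrite ltr_pdivlMr // => h.
  by apply: le_lt_trans h; rewrite ler_wpM2l ?hnorm_ge0.
have t2 : hnorm l * hnorm (w n - m) < e / 2%:R.
  have := hN2 n n2; rewrite ltr_pdivlMr // mulrC => h.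
  by apply: le_lt_trans h; rewrite ler_wpM2r ?hnorm_ge0 ?lerDl.
have : e / 2%:R + e / 2%:R = e by field.
lra.
Qed.

End NormConvergence.

Section BoundedOperators.
Variables (R : realType) (V W : lmodType R[i]) (HV : hilbert V) (HW : hilbert W).

Lemma bounded_op_pos (T : V -> W) : bounded_op HV HW T ->
  exists2 M : R, 0 < M & forall x, hnorm HW (T x) <= M * hnorm HV x.
Proof.
case=> _ [M hM]; exists (`|M| + 1) => [|x]; first by rewrite ltr_wpDl.
apply: le_trans (hM x) _; rewrite ler_wpM2r ?hnorm_ge0 //.
by have := ler_norm M; lra.
Qed.

End BoundedOperators.

Lemma bounded_op_comp (R : realType) (U V W : lmodType R[i]) (HU : hilbert U) (HV : hilbert V)
  (HW : hilbert W) (S : V -> W) (T : U -> V) :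
  bounded_op HV HW S -> bounded_op HU HV T -> bounded_op HU HW (S \o T).
Proof.
move=> bS bT; have [MS MS0 hS] := bounded_op_pos bS; have [MT MT0 hT] := bounded_op_pos bT.
split=> [a x y /=|]; first by rewrite bT.1 bS.1.
exists (MS * MT) => x /=; apply: le_trans (hS _) _.
by rewrite -mulrA ler_wpM2l ?(ltW MS0).
Qed.

(** * Orthogonal projection, Riesz representation and adjoints *)

Section OrthogonalProjection.
Variables (R : realType) (V : lmodType R[i]) (H : hilbert V).
Local Notation inner := (inner H).
Local Notation hnorm := (hnorm H).
Local Notation hsqnorm := (hsqnorm H).

Variable M : V -> Prop.
Hypothesis M0 : M 0.
Hypothesis MD : forall x y, M x -> M y -> M (x + y).
Hypothesis MZ : forall a x, M x -> M (a *: x).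
Hypothesis M_closed :
  forall x, (forall e : R, 0 < e -> exists2 m, M m & hnorm (x - m) < e) -> M x.

(* parallelogram law applied to [x - m_a] and [x - m_b], whose midpoint lies in [M] *)
Lemma minimizing_sequence_cauchy x (d : R) (ms : nat -> V) (eps : nat -> R) :
  (forall m, M m -> d <= hsqnorm (x - m)) -> (forall n, M (ms n)) ->
  (forall n, hsqnorm (x - ms n) < d + eps n) ->
  forall a b, hsqnorm (ms a - ms b) <= 2%:R * eps a + 2%:R * eps b.
Proof.
move=> d_lb Mms ms_min a b.
have := hsqnorm_parallelogram H (x - ms b) (x - ms a).
have -> : x - ms b - (x - ms a) = ms a - ms b by rewrite opprB addrC addrA subrK.
have -> : x - ms b + (x - ms a) = 2%:R *: (x - 2%:R^-1 *: (ms a + ms b)).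
  rewrite scalerBr scalerA divff ?pnatr_eq0 // scale1r scaler_nat mulr2n.
  by rewrite addrACA opprD (addrC (- ms a)).
rewrite hsqnormZ cmod_nat.
have := d_lb _ (MZ 2%:R^-1 (MD (Mms a) (Mms b))).
by have := ms_min a; have := ms_min b; lra.
Qed.

Lemma nearest_point_exists x :
  exists2 p, M p & forall m, M m -> hsqnorm (x - p) <= hsqnorm (x - m).
Proof.
pose S : set R := fun r => exists2 m, M m & r = hsqnorm (x - m).
have hS : has_inf S.
  split; first by exists (hsqnorm (x - 0)), 0.
  by exists 0 => r [m _ ->]; exact: hsqnorm_ge0.
have d_lb m : M m -> inf S <= hsqnorm (x - m) by move=> Mm; apply: (ge_inf hS.2); exists m.
have d0 : 0 <= inf S.
  rewrite leNgt; apply/negP => /[dup] d_lt0; rewrite -oppr_gt0 => /inf_adherent /(_ hS).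
  by case=> _ [m _ ->]; rewrite subrr ltNge hsqnorm_ge0.
pose eps n : R := n.+1%:R^-1.
have eps0 n : 0 < eps n by rewrite invr_gt0 ltr0Sn.
have /choice[ms ms_min] : forall n, exists m, M m /\ hsqnorm (x - m) < inf S + eps n.
  by move=> n; have [_ [m Mm ->] m_lt] := inf_adherent (eps0 n) hS; exists m.
have cau := minimizing_sequence_cauchy d_lb (fun n => (ms_min n).1) (fun n => (ms_min n).2).
have [p ms_p] : exists p, hconverges H ms p.
  apply: hcauchy_cvg => e e0.
  have [N hN] := archi_invS (divr_gt0 (exprn_gt0 2 e0) (ltr0n _ 4)).
  exists N => a b Na Nb; apply: hnorm_lt => //; apply: le_lt_trans (cau a b) _.
  have := hN a Na; have := hN b Nb; rewrite -/(eps a) -/(eps b).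
  have : e ^+ 2 = 4%:R * (e ^+ 2 / 4%:R) by field.
  by lra.
exists p => [|m Mm].
  apply: M_closed => e e0; have [N hN] := ms_p e e0.
  by exists (ms N); [exact: (ms_min N).1 | rewrite hnormBC hN].
apply: le_trans (d_lb m Mm); apply: hsqnorm_lim_le d0 (hcvgB (hcvg_cst H x) ms_p) _ => n.
exact: (ms_min n).2.
Qed.

(* compare [p] with the competitor [p + s <x - p, m> m] for a small real [s] *)
Lemma nearest_point_orthogonal x p : M p ->
  (forall m, M m -> hsqnorm (x - p) <= hsqnorm (x - m)) ->
  forall m, M m -> inner (x - p) m = 0.
Proof.
move=> Mp p_min m Mm; set c := inner (x - p) m.
have z0 := hsqnorm_ge0 H m; set z := hsqnorm m in z0.
set s := (z + 1)^-1.
have s0 : 0 < s by rewrite invr_gt0 ltr_wpDl.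
have sz : s * z < 2%:R by rewrite mulrC ltr_pdivrMr ?ltr_wpDl //; lra.
have := p_min _ (MD Mp (MZ (s%:C * c) Mm)).
rewrite opprD addrA [X in _ <= X]hsqnormB hsqnormZ innerZr conjc_realM -/c -mulrA.
rewrite [c^*%C * _]mulrC mulcJ_cmod -rmorphM cmodM cmodR ger0_norm ?(ltW s0) //= -/z.
have -> : hsqnorm (x - p) + (s * cmod c) ^+ 2 * z - 2%:R * (s * cmod c ^+ 2)
        = hsqnorm (x - p) - (s * cmod c ^+ 2) * (2%:R - s * z) by ring.
move=> h.
have : cmod c ^+ 2 <= 0.
  rewrite -(pmulr_rle0 _ s0) -(pmulr_rle0 _ (_ : 0 < 2%:R - s * z)); last by lra.
  by rewrite mulrC; lra.
by move=> c2; apply: cmod_eq0; apply/eqP; rewrite -sqrf_eq0 eq_le c2 sqr_ge0.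
Qed.

Lemma orthogonal_projection x : exists2 p, M p & forall m, M m -> inner (x - p) m = 0.
Proof.
have [p Mp p_min] := nearest_point_exists x.
by exists p => //; exact: nearest_point_orthogonal.
Qed.

End OrthogonalProjection.

Section Riesz.
Variables (R : realType) (V : lmodType R[i]) (H : hilbert V).
Local Notation inner := (inner H).
Local Notation hnorm := (hnorm H).

Lemma riesz_representation (f : V -> R[i]^o) : is_linear f ->
  (exists K : R, forall x, cmod (f x) <= K * hnorm x) -> exists z, forall x, f x = inner x z.
Proof.
move=> flin [K fK].
have f0 : f 0 = 0 := is_linear0 flin.
have fB x y : f (x - y) = f x - f y := is_linearB flin x y.
have fZ a x : f (a *: x) = a * f x := is_linearZ flin a x.
have [[x0 fx0]|f_eq0] := pselect (exists x, f x <> 0); last first.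
  exists 0 => x; rewrite inner0r.
  by have [//|fx] := pselect (f x = 0); case: f_eq0; exists x.
pose M x := f x = 0.
have M_closed x : (forall e : R, 0 < e -> exists2 m, M m & hnorm (x - m) < e) -> M x.
  move=> xM; apply: cmod_eq0; apply/eqP; rewrite eq_le cmod_ge0 andbT.
  apply/ler_addgt0Pr => e e0; rewrite add0r.
  have K1 : 0 < `|K| + 1 by rewrite ltr_wpDl.
  have [m Mm xm] := xM _ (divr_gt0 e0 K1).
  rewrite -[x](subrK m) (is_linearD flin) Mm addr0; apply: le_trans (fK _) _.
  apply: le_trans (_ : (`|K| + 1) * hnorm (x - m) <= _).
    by rewrite ler_wpM2r ?hnorm_ge0 //; have := ler_norm K; lra.
  by rewrite mulrC -ler_pdivlMr // ltW.
have MD x y : M x -> M y -> M (x + y) by rewrite /M (is_linearD flin) => -> ->; rewrite addr0.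
have MZ a x : M x -> M (a *: x) by rewrite /M fZ => ->; rewrite mulr0.
have [p Mp w_perp] := orthogonal_projection f0 MD MZ M_closed x0.
set w := x0 - p in w_perp.
have fw : f w != 0 by rewrite /w fB Mp subr0; apply/eqP.
have ww : (hsqnorm H w)%:C != 0.
  by apply: contra fw; rewrite -inner_self => /eqP/(@inner_eq0 _ _ H) ->; rewrite f0.
exists ((f w / (hsqnorm H w)%:C)^*%C *: w) => x.
have xw : inner x w = f x / f w * (hsqnorm H w)%:C.
  have /w_perp : M (x - (f x / f w) *: w) by rewrite /M fB fZ divfK ?subrr.
  move/(congr1 (fun c => c^*%C)); rewrite conjc0 innerBr innerZr rmorphB rmorphM /=.
  by rewrite conjcK -!inner_conj inner_self => /eqP; rewrite subr_eq0 => /eqP.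
by rewrite innerZr conjcK xw; field; apply/andP.
Qed.

End Riesz.

Section Adjoint.
Variables (R : realType) (V W : lmodType R[i]) (HV : hilbert V) (HW : hilbert W).

Lemma adjoint_exists (T : V -> W) : bounded_op HV HW T -> exists S, is_adjoint HV HW T S.
Proof.
move=> bT; have [M M0 TM] := bounded_op_pos bT.
suff /choice[S TS] : forall y, exists z, forall x, inner HW (T x) y = inner HV x z.
  by exists S.
move=> y; apply: (riesz_representation (f := fun x => inner HW (T x) y : R[i]^o)).
  by move=> a x x'; rewrite bT.1 innerDl innerZl.
exists (M * hnorm HW y) => x; apply: le_trans (cauchy_schwarz _ _ _) _.
by rewrite mulrAC ler_wpM2r ?hnorm_ge0.
Qed.

Lemma adjoints_exist I (P : pred I) (T : I -> V -> W) :
  (forall i, P i -> bounded_op HV HW (T i)) ->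
  exists S : I -> W -> V, forall i, P i -> is_adjoint HV HW (T i) (S i).
Proof.
move=> bT; suff /choice[S hS] : forall i, exists S, P i -> is_adjoint HV HW (T i) S by exists S.
by move=> i; have [/bT/adjoint_exists[S] | _] := boolP (P i); [exists S | exists (fun=> 0)].
Qed.

End Adjoint.

(** * Extending a Gram identity to a unitary *)

Definition total_family (R : realType) (V : lmodType R[i]) (H : hilbert V) I (g : I -> V) :=
  forall x, (forall i, inner H x (g i) = 0) -> x = 0.

Definition lincomb (R : realType) (V : lmodType R[i]) I (g : I -> V) (L : seq (R[i] * I)) :=
  \sum_(c <- L) c.1 *: g c.2.

Definition isometry (R : realType) (V W : lmodType R[i]) (HV : hilbert V) (HW : hilbert W)
  (U : V -> W) := forall x x', inner HW (U x) (U x') = inner HV x x'.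

Section LinearCombinations.
Variables (R : realType) (V : lmodType R[i]) (I : Type) (g : I -> V).
Implicit Types (L : seq (R[i] * I)).

Lemma lincomb_cat L L' : lincomb g (L ++ L') = lincomb g L + lincomb g L'.
Proof. exact: big_cat. Qed.

Lemma lincombZ a L : lincomb g [seq (a * c.1, c.2) | c <- L] = a *: lincomb g L.
Proof. by rewrite /lincomb big_map scaler_sumr; apply: eq_bigr => c _; rewrite scalerA. Qed.

Lemma lincombB L L' : lincomb g L - lincomb g L' = lincomb g (L ++ [seq (-1 * c.1, c.2) | c <- L']).
Proof. by rewrite lincomb_cat lincombZ scaleN1r. Qed.

Lemma lincomb1 i : lincomb g [:: (1, i)] = g i.
Proof. by rewrite /lincomb big_seq1 scale1r. Qed.

End LinearCombinations.

Section TotalFamily.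
Variables (R : realType) (X : lmodType R[i]) (HX : hilbert X) (I : Type) (g : I -> X).
Hypothesis g_total : total_family HX g.

Lemma bounded_op_total_eq (W : lmodType R[i]) (HW : hilbert W) (T1 T2 : X -> W) :
  bounded_op HX HW T1 -> bounded_op HX HW T2 -> (forall i, T1 (g i) = T2 (g i)) -> T1 =1 T2.
Proof.
move=> bT1 bT2 Tg x; pose M x := T1 x = T2 x.
have M0 : M 0 by rewrite /M (is_linear0 bT1.1) (is_linear0 bT2.1).
have MD y z : M y -> M z -> M (y + z).
  by rewrite /M (is_linearD bT1.1) (is_linearD bT2.1) => -> ->.
have MZ a y : M y -> M (a *: y) by rewrite /M (is_linearZ bT1.1) (is_linearZ bT2.1) => ->.
have M_closed y : (forall e : R, 0 < e -> exists2 m, M m & hnorm HX (y - m) < e) -> M y.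
  move=> yM; have [K1 K1_0 hK1] := bounded_op_pos bT1; have [K2 K2_0 hK2] := bounded_op_pos bT2.
  rewrite /M; apply/eqP; rewrite -subr_eq0; apply/eqP; apply: (@hnorm_le_eq0 _ _ HW) => e e0.
  have [m Mm ym] := yM _ (divr_gt0 e0 (addr_gt0 K1_0 K2_0)).
  have -> : T1 y - T2 y = T1 (y - m) - T2 (y - m).
    by rewrite (is_linearB bT1.1) (is_linearB bT2.1) [T1 m]Mm opprB addrA subrK.
  apply: le_trans (hnormD _ _ _) _; rewrite hnormN.
  have := hK1 (y - m); have := hK2 (y - m).
  by move: ym; rewrite ltr_pdivlMr ?addr_gt0 //; lra.
have [p Mp xp] := orthogonal_projection M0 MD MZ M_closed x.
suff <- : p = x by [].
by apply/eqP; rewrite eq_sym -subr_eq0; apply/eqP/g_total => i; apply: xp; apply: Tg.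
Qed.

Lemma lincomb_dense x e : 0 < e -> exists L, hnorm HX (x - lincomb g L) < e.
Proof.
pose M y := forall e : R, 0 < e -> exists L, hnorm HX (y - lincomb g L) < e.
have M0 : M 0 by move=> e' e'0; exists [::]; rewrite /lincomb big_nil subrr hnorm0.
have MD y z : M y -> M z -> M (y + z).
  move=> yM zM e' e'0; have [L1 hL1] := yM _ (half_gt0 e'0); have [L2 hL2] := zM _ (half_gt0 e'0).
  exists (L1 ++ L2); rewrite lincomb_cat opprD addrACA.
  have := hnormD HX (y - lincomb g L1) (z - lincomb g L2).
  have : e' / 2%:R + e' / 2%:R = e' by field.
  lra.
have MZ a y : M y -> M (a *: y).
  move=> yM e' e'0; have a1 : 0 < cmod a + 1 by rewrite ltr_wpDl ?cmod_ge0.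
  have [L hL] := yM _ (divr_gt0 e'0 a1); exists [seq (a * c.1, c.2) | c <- L].
  rewrite lincombZ -scalerBr hnormZ; move: hL; rewrite ltr_pdivlMr // => hL.
  by apply: le_lt_trans hL; rewrite mulrC ler_wpM2l ?hnorm_ge0 ?lerDl.
have M_closed y : (forall e : R, 0 < e -> exists2 m, M m & hnorm HX (y - m) < e) -> M y.
  move=> yM e' e'0; have [m Mm ym] := yM _ (half_gt0 e'0); have [L hL] := Mm _ (half_gt0 e'0).
  exists L; have := hnorm_distD HX y m (lincomb g L).
  have : e' / 2%:R + e' / 2%:R = e' by field.
  lra.
have [p Mp xp] := orthogonal_projection M0 MD MZ M_closed x.
suff -> : x = p by exact: Mp.
apply/eqP; rewrite -subr_eq0; apply/eqP/g_total => i; apply: xp => e' e'0.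
by exists [:: (1, i)]; rewrite lincomb1 subrr hnorm0.
Qed.

Lemma lincomb_approx x : exists Ls, hconverges HX (fun n => lincomb g (Ls n)) x.
Proof.
have /choice[Ls hLs] n : exists L, hnorm HX (x - lincomb g L) < n.+1%:R^-1.
  by apply: lincomb_dense; rewrite invr_gt0 ltr0Sn.
exists Ls => e e0; have [N hN] := archi_invS e0; exists N => n Nn.
by rewrite hnormBC; apply: lt_trans (hN n Nn).
Qed.

End TotalFamily.

Section GramExtension.
Variables (R : realType) (X Xt : lmodType R[i]) (HX : hilbert X) (HXt : hilbert Xt).
Variables (I : Type) (g : I -> X) (gt : I -> Xt).
Hypothesis gram : forall i j, inner HX (g i) (g j) = inner HXt (gt i) (gt j).
Hypothesis g_total : total_family HX g.

Lemma inner_lincomb_gram L L' :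
  inner HX (lincomb g L) (lincomb g L') = inner HXt (lincomb gt L) (lincomb gt L').
Proof.
rewrite /lincomb !inner_suml; apply: eq_bigr => c _.
by rewrite !inner_sumr; apply: eq_bigr => c' _; rewrite !innerZl !innerZr gram.
Qed.

Lemma hnorm_lincombB_gram L L' :
  hnorm HX (lincomb g L - lincomb g L') = hnorm HXt (lincomb gt L - lincomb gt L').
Proof. by rewrite !lincombB /Defs.hnorm inner_lincomb_gram. Qed.

(* [lincomb g L |-> lincomb gt L] is isometric, hence maps Cauchy sequences to Cauchy ones *)
Lemma gram_extension_exists : exists U : X -> Xt,
  forall x Ls, hconverges HX (fun n => lincomb g (Ls n)) x ->
    hconverges HXt (fun n => lincomb gt (Ls n)) (U x).
Proof.
suff /choice[U hU] : forall x, exists y, exists Ls, hconverges HX (fun n => lincomb g (Ls n)) x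
    /\ hconverges HXt (fun n => lincomb gt (Ls n)) y.
  exists U => x Ks Ks_x e e0; have [Ls [Ls_x Ls_U]] := hU x.
  have e3 : 0 < e / 3%:R by rewrite divr_gt0 ?ltr0n.
  have [N1 hN1] := Ks_x _ e3; have [N2 hN2] := Ls_x _ e3; have [N3 hN3] := Ls_U _ e3.
  exists (maxn N1 (maxn N2 N3)) => n; rewrite !geq_max => /and3P[n1 n2 n3].
  have := hnorm_distD HXt (lincomb gt (Ks n)) (lincomb gt (Ls n)) (U x).
  have := hnorm_distD HX (lincomb g (Ks n)) x (lincomb g (Ls n)).
  rewrite -hnorm_lincombB_gram (hnormBC HX x).
  have := hN1 n n1; have := hN2 n n2; have := hN3 n n3.
  have : e / 3%:R + e / 3%:R + e / 3%:R = e by field.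
  lra.
move=> x; have [Ls Ls_x] := lincomb_approx g_total x.
suff [y Ls_y] : exists y, hconverges HXt (fun n => lincomb gt (Ls n)) y by exists y, Ls.
apply: hcauchy_cvg => e e0; have [N hN] := Ls_x _ (half_gt0 e0).
exists N => m n Nm Nn; rewrite -hnorm_lincombB_gram.
have := hnorm_distD HX (lincomb g (Ls m)) x (lincomb g (Ls n)).
have := hN m Nm; have := hN n Nn; rewrite (hnormBC HX (lincomb g (Ls n))).
have : e / 2%:R + e / 2%:R = e by field.
lra.
Qed.

Lemma gram_isometry_exists :
  exists U : X -> Xt, [/\ is_linear U, isometry HX HXt U & forall i, U (g i) = gt i].
Proof.
have [U hU] := gram_extension_exists; exists U; split.
- move=> a x y; have [Kx Kx_x] := lincomb_approx g_total x.
  have [Ky Ky_y] := lincomb_approx g_total y.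
  pose K n := [seq (a * c.1, c.2) | c <- Kx n] ++ Ky n.
  have K_lincomb (V : lmodType R[i]) (h : I -> V) n :
      a *: lincomb h (Kx n) + lincomb h (Ky n) = lincomb h (K n).
    by rewrite lincomb_cat lincombZ.
  apply: hcvg_unique (hU _ K _) _; first exact: hcvg_eq (K_lincomb _ g) (hcvgD (hcvgZ a Kx_x) Ky_y).
  exact: hcvg_eq (K_lincomb _ gt) (hcvgD (hcvgZ a (hU _ _ Kx_x)) (hU _ _ Ky_y)).
- move=> x x'; have [K K_x] := lincomb_approx g_total x.
  have [K' K'_x'] := lincomb_approx g_total x'.
  apply: cconverges_unique (hcvg_inner (hU _ _ K_x) (hU _ _ K'_x')) _.
  move=> e e0; have [N hN] := hcvg_inner K_x K'_x' e0.
  by exists N => n Nn; rewrite -inner_lincomb_gram hN.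
- move=> i; rewrite -(lincomb1 g) -(lincomb1 gt).
  exact: hcvg_unique (hU _ (fun=> [:: (1, i)]) (hcvg_cst _ _)) (hcvg_cst _ _).
Qed.

End GramExtension.

Lemma isometry_bounded (R : realType) (X Xt : lmodType R[i]) (HX : hilbert X) (HXt : hilbert Xt)
  (U : X -> Xt) : is_linear U -> isometry HX HXt U -> bounded_op HX HXt U.
Proof. by move=> linU isoU; split=> //; exists 1 => x; rewrite mul1r /Defs.hnorm isoU. Qed.

Lemma gram_unitary_exists (R : realType) (X Xt : lmodType R[i]) (HX : hilbert X)
  (HXt : hilbert Xt) I (g : I -> X) (gt : I -> Xt) :
  (forall i j, inner HX (g i) (g j) = inner HXt (gt i) (gt j)) ->
  total_family HX g -> total_family HXt gt ->
  exists (U : X -> Xt) (Ui : Xt -> X),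
    [/\ is_linear U, cancel U Ui, cancel Ui U, isometry HX HXt U & forall i, U (g i) = gt i].
Proof.
move=> gram g_total gt_total.
have [U [linU isoU Ug]] := gram_isometry_exists gram g_total.
have [Ui [linUi isoUi Uigt]] := gram_isometry_exists (fun i j => esym (gram i j)) gt_total.
have id_bounded (V : lmodType R[i]) (HV : hilbert V) : bounded_op HV HV id.
  exact: isometry_bounded.
have [bU bUi] := (isometry_bounded linU isoU, isometry_bounded linUi isoUi).
exists U, Ui; split=> //.
- apply: (bounded_op_total_eq g_total (bounded_op_comp bUi bU) (id_bounded _ _)) => i.
  by rewrite /= Ug Uigt.
- apply: (bounded_op_total_eq gt_total (bounded_op_comp bU bUi) (id_bounded _ _)) => i.
  by rewrite /= Uigt Ug.
Qed.

(** * The multinomial expansion of [E_hom] *)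

Section TupleCounting.
Local Open Scope nat_scope.

Lemma big_tuple_cons (V : nmodType) (T : finType) k (F : k.+1.-tuple T -> V) :
  (\sum_(v : k.+1.-tuple T) F v = \sum_(j : T) \sum_(w : k.-tuple T) F (cons_tuple j w))%R.
Proof.
rewrite pair_big /= (reindex (fun p : T * k.-tuple T => cons_tuple p.1 p.2)) //=.
exists (fun t => (thead t, behead_tuple t)) => [[j w] _ | t _] /=.
  by rewrite theadE; congr pair; apply: val_inj.
by rewrite [in RHS](tuple_eta t); apply: val_inj.
Qed.

Lemma big_tuple0 (V : nmodType) (T : finType) (F : 0.-tuple T -> V) :
  (\sum_(v : 0.-tuple T) F v = F [tuple])%R.
Proof. by rewrite (big_pred1 [tuple]) // => v; apply/esym/eqP; rewrite [v]tuple0. Qed.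

Lemma sum_count_mem (T : finType) (s : seq T) : \sum_(j : T) count_mem j s = size s.
Proof.
elim: s => [|a s IH] /=; first by rewrite big1.
rewrite big_split /= IH (bigD1 a) //= eqxx big1 // => j /negbTE.
by rewrite eq_sym => ->.
Qed.

Definition ntuples_count d k (n : 'I_d -> nat) :=
  \sum_(v : k.-tuple 'I_d) [forall j, count_mem j v == n j].

Lemma ntuples_countS d k (n : 'I_d -> nat) :
  ntuples_count k.+1 n =
    \sum_(j < d) if 0 < n j then ntuples_count k (fun i => n i - (j == i)) else 0.
Proof.
rewrite /ntuples_count big_tuple_cons; apply: eq_bigr => j _; case: ifP => nj.
  apply: eq_bigr => w _; congr nat_of_bool.
  by apply/forallP/forallP => h i; have /= /eqP := h i; case: eqP => [<-|_] /= hi; apply/eqP; lia.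
apply: big1 => w _; apply/eqP; rewrite eqb0; apply/forallP => /(_ j) /=.
by rewrite eqxx; lia.
Qed.

Lemma ntuples_count_fact d k (n : 'I_d -> nat) :
  \sum_(j < d) n j = k -> ntuples_count k n * \prod_(j < d) (n j)`! = k`!.
Proof.
elim: k n => [|k IH] n sum_n.
  have n0 j : n j = 0 by move/eqP: sum_n; rewrite sum_nat_eq0 => /forallP /(_ j) /eqP.
  rewrite /ntuples_count big_tuple0 big1 ?muln1 => [|j _]; last by rewrite n0.
  by have -> : [forall j, count_mem j [tuple] == n j] by apply/forallP => j; rewrite n0.
rewrite ntuples_countS big_distrl /= factS -sum_n big_distrl /=; apply: eq_bigr => j _.
case: ifP => nj; last by rewrite mul0n; lia.
set n' := fun i => n i - (j == i).
have n'_ne i : i != j -> n' i = n i by rewrite /n' eq_sym => /negbTE ->; rewrite subn0.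
have sum_n' : \sum_(i < d) n' i = k.
  move: sum_n; rewrite (bigD1 j) //= (bigD1 j (P := predT)) //= /n' eqxx.
  by rewrite [X in _ -> _ + X = k](eq_bigr n) => [/=|i /n'_ne //]; lia.
rewrite -(IH _ sum_n') (bigD1 j) //= (bigD1 j (P := predT)) //=.
rewrite [X in _ = _ * (_ * (_ * X))](eq_bigr (fun i => (n i)`!)) => [|i /n'_ne -> //].
have [a na] : exists a, n j = a.+1 by exists (n j).-1; lia.
by rewrite /n' eqxx /= na subn1 succnK factS; nia.
Qed.

End TupleCounting.

Section Pencil.
Variables (R : realType) (d : nat) (X : lmodType R[i]) (A : 'I_d -> X -> X).
Hypothesis linA : forall j, is_linear (A j).
Implicit Types (l : 'I_d -> R[i]) (x y : X).

Definition pencil l x := \sum_(j < d) l j *: A j x.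

Definition pencil_pow l k x := iter k (pencil l) x.

Lemma pencil_linear l : is_linear (pencil l).
Proof.
move=> a x y; rewrite /pencil scaler_sumr -big_split; apply: eq_bigr => j _ /=.
by rewrite linA scalerDr !scalerA mulrC.
Qed.

Lemma pencil_pow_linear l k : is_linear (pencil_pow l k).
Proof. by elim: k => [|k IH] a x y //=; rewrite -!/(pencil_pow l k _) IH pencil_linear. Qed.

Lemma pencil0 y : pencil (fun=> 0) y = 0.
Proof. by rewrite /pencil big1 // => j _; rewrite scale0r. Qed.

Lemma pencilZ (c : R[i]) l y : pencil (fun j => c * l j) y = c *: pencil l y.
Proof. by rewrite /pencil scaler_sumr; apply: eq_bigr => j _; rewrite scalerA. Qed.

Lemma pencil_powZ (c : R[i]) l k x :
  pencil_pow (fun j => c * l j) k x = c ^+ k *: pencil_pow l k x.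
Proof.
elim: k => [|k IH]; first by rewrite scale1r.
rewrite /pencil_pow !iterS -!/(pencil_pow _ k x) IH pencilZ.
by rewrite (is_linearZ (pencil_linear l)) scalerA exprS.
Qed.

Lemma pencil_shift l j (s : R[i]) y :
  pencil (fun i => l i + (i == j)%:R * s) y = pencil l y + s *: A j y.
Proof.
rewrite /pencil; under eq_bigr do rewrite scalerDl.
rewrite big_split /=; congr (_ + _).
rewrite (bigD1 j) //= eqxx mul1r big1 ?addr0 // => i /negbTE ->.
by rewrite mul0r scale0r.
Qed.

Lemma is_linear_apply_word v : is_linear (apply_word A v).
Proof. by elim: v => [|j v IH] a x y //=; rewrite IH linA. Qed.

Lemma pencil_pow_words l k x : pencil_pow l k x =
  \sum_(v : k.-tuple 'I_d) (\prod_(i <- v) l i) *: apply_word A v x.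
Proof.
elim: k => [|k IH]; first by rewrite big_tuple0 big_nil scale1r.
rewrite /pencil_pow iterS -/(pencil_pow l k x) IH big_tuple_cons /pencil.
apply: eq_bigr => j _; rewrite (is_linear_sum (linA j)) scaler_sumr.
by apply: eq_bigr => w _; rewrite (is_linearZ (linA j)) scalerA big_cons.
Qed.

Lemma prod_count_mem l (v : seq 'I_d) :
  \prod_(i <- v) l i = \prod_(j < d) l j ^+ count_mem j v.
Proof.
elim: v => [|a v IH]; first by rewrite big_nil big1 // => j _; rewrite expr0.
rewrite big_cons IH /=; under [RHS]eq_bigr do rewrite exprD.
rewrite big_split /=; congr (_ * _).
rewrite (bigD1 a) //= eqxx expr1 big1 ?mulr1 // => j /negbTE.
by rewrite eq_sym => ->; rewrite expr0.
Qed.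

Hypothesis commA : commutative_tuple A.

Lemma A_pencil_comm j l y : A j (pencil l y) = pencil l (A j y).
Proof.
rewrite /pencil (is_linear_sum (linA j)); apply: eq_bigr => i _.
by rewrite (is_linearZ (linA j)) commA.
Qed.

Lemma A_pencil_pow_comm j l k y : A j (pencil_pow l k y) = pencil_pow l k (A j y).
Proof. by elim: k => //= k IH; rewrite -!/(pencil_pow l k _) A_pencil_comm IH. Qed.

Lemma iter_A_comm i j m c y :
  iter m (A i) (iter c (A j) y) = iter c (A j) (iter m (A i) y).
Proof.
have A_iter c' z : A i (iter c' (A j) z) = iter c' (A j) (A i z).
  by elim: c' => //= c' IH; rewrite commA IH.
by elim: m => //= m ->; rewrite A_iter.
Qed.

Lemma apply_word_apow (v : seq 'I_d) x :
  apply_word A v x = apow A (fun j => count_mem j v) x.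
Proof.
have apow_ext n n' : n =1 n' -> apow A n x = apow A n' x.
  by move=> nn'; rewrite /apow; elim: (enum 'I_d) => //= i s ->; rewrite nn'.
elim: v => [|a v IH]; first by rewrite /apow; elim: (enum 'I_d) => //= i s <-.
rewrite /= IH [RHS](apow_ext _ (fun i => count_mem i v + (i == a))%N); last first.
  by move=> i /=; rewrite addnC eq_sym.
have foldr_shift (s : seq 'I_d) :
    foldr (fun i z => iter (count_mem i v + (i == a)) (A i) z) x s =
    iter (count_mem a s) (A a) (foldr (fun i z => iter (count_mem i v) (A i) z) x s).
  elim: s => //= i s ->; case: (eqVneq i a) => [->|_]; last by rewrite addn0 iter_A_comm.
  by rewrite -!iterD; congr iter; rewrite /=; lia.
by rewrite /apow foldr_shift count_uniq_mem ?enum_uniq // mem_enum.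
Qed.

Lemma E_hom_pencil_pow (Y : lmodType R[i]) (Cop : X -> Y) l k x : is_linear Cop ->
  E_hom Cop A l k x = Cop (pencil_pow l k x).
Proof.
move=> linC; rewrite pencil_pow_words (is_linear_sum linC).
pose cnt (v : k.-tuple 'I_d) : {ffun 'I_d -> 'I_k.+1} := [ffun j => inord (count_mem j v)].
have cntE v j : cnt v j = count_mem j v :> nat.
  by rewrite ffunE inordK // ltnS (leq_trans (count_size _ _)) ?size_tuple.
pose G (n : {ffun 'I_d -> 'I_k.+1}) :=
  (\prod_(j < d) l j ^+ n j) *: Cop (apow A (fun j => (n j : nat)) x).
have termE (v : k.-tuple 'I_d) : Cop ((\prod_(i <- v) l i) *: apply_word A v x) = G (cnt v).
  rewrite (is_linearZ linC) prod_count_mem apply_word_apow /G.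
  congr (_ *: Cop _); first by apply: eq_bigr => j _; rewrite cntE.
  by congr apow; apply: funext => j; rewrite cntE.
under eq_bigr do rewrite termE.
rewrite (partition_big cnt (fun n => \sum_(j < d) (n j : nat) == k)%N); last first.
  by move=> v _; rewrite (eq_bigr _ (fun j _ => cntE v j)) sum_count_mem size_tuple.
apply: eq_bigr => n /eqP sum_n; rewrite (eq_bigr (fun _ => G n)) => [|v /andP[_ /eqP ->] //].
rewrite (eq_bigl (fun v => v \in [pred v | cnt v == n])) // sumr_const /G scalerMnl.
congr (_ *: _).
have card_n : #|[pred v | cnt v == n]| = ntuples_count k (fun j => n j).
  rewrite /ntuples_count -sum1_card big_mkcond /=; apply: eq_bigr => v _.
  rewrite inE; suff -> : (cnt v == n) = [forall j, count_mem j v == n j] by case: [forall j, _].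
  apply/eqP/forallP => [<- j|cnt_n]; first by rewrite cntE.
  by apply/ffunP => j; apply: val_inj; rewrite /= cntE; apply/eqP.
rewrite -(ntuples_count_fact sum_n) natrM -card_n mulfK ?mulr_natl //.
by rewrite pnatr_eq0 -lt0n prodn_gt0 // => j; rewrite fact_gt0.
Qed.

End Pencil.

(** * Power series with coefficients in a Hilbert space *)

Section Geometric.
Variable R : realType.
Implicit Types (r h : R).

Lemma geometric_sum_le r n : 0 <= r -> r < 1 -> \sum_(k < n) r ^+ k <= (1 - r)^-1.
Proof.
move=> r0 r1; have r1' : 1 - r != 0 by rewrite subr_eq0 eq_sym lt_eqF.
have -> : \sum_(k < n) r ^+ k = (1 - r ^+ n) / (1 - r).
  by apply: (mulIf r1'); rewrite divfK // mulrC -opprB mulNr -subrX1 opprB.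
by rewrite ler_pdivrMr ?subr_gt0 // mulVf // gerBl exprn_ge0.
Qed.

Lemma geometric_tail_le r n m : 0 <= r -> r < 1 -> \sum_(n <= k < m) r ^+ k <= r ^+ n / (1 - r).
Proof.
move=> r0 r1; rewrite -{1}[n]add0n big_addn.
under eq_bigr do rewrite exprD.
by rewrite -mulr_suml big_mkord mulrC ler_wpM2l ?exprn_ge0 ?geometric_sum_le.
Qed.

Lemma bernoulli_ineq h n : 0 <= h -> 1 + n%:R * h <= (1 + h) ^+ n.
Proof.
move=> h0; elim: n => [|n IH]; first by rewrite mul0r addr0 expr0.
rewrite exprS -natr1.
have := ler_wpM2l (addr_ge0 ler01 h0 : 0 <= 1 + h) IH.
have : 0 <= h * (n%:R * h) by rewrite !mulr_ge0.
by nra.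
Qed.

Lemma expr_eventually_lt r (e : R) : 0 <= r -> r < 1 -> 0 < e ->
  exists N, forall n, (N <= n)%N -> r ^+ n < e.
Proof.
move=> r0 r1 e0; have [->|r_neq0] := eqVneq r 0.
  by exists 1%N => -[|n] //; rewrite expr0n.
have rp : 0 < r by rewrite lt_neqAle eq_sym r_neq0.
set h := r^-1 - 1; have h0 : 0 < h by rewrite subr_gt0 invf_gt1.
have eh : 0 < e * h by rewrite mulr_gt0.
exists (Num.bound (e * h)^-1) => n Nn.
have nb : (e * h)^-1 < n%:R.
  have ehi : 0 <= (e * h)^-1 by rewrite invr_ge0 ltW.
  by apply: lt_le_trans (archi_boundP ehi) _; rewrite ler_nat.
have -> : r = (1 + h)^-1 by rewrite /h addrC subrK invrK.
have pos1 : 0 < 1 + n%:R * h by rewrite ltr_wpDr // mulr_ge0 // ltW.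
have pos2 : 0 < (1 + h) ^+ n by rewrite exprn_gt0 // ltr_wpDr // ltW.
rewrite exprVn; apply: le_lt_trans (_ : (1 + n%:R * h)^-1 < e).
  by rewrite lef_pV2 ?posrE // bernoulli_ineq // ltW.
rewrite -[(1 + _)^-1]mul1r ltr_pdivrMr //.
have : 1 < n%:R * (e * h) by rewrite -ltr_pdivrMr // div1r.
by nra.
Qed.

End Geometric.

Section PowerSeries.
Variables (R : realType) (V : lmodType R[i]) (H : hilbert V).
Local Notation hnorm := (hnorm H).
Local Notation hcvg := (hconverges H).

Lemma hseries_geometric_cvg (a : nat -> V) (K r : R) : 0 <= r -> r < 1 ->
  (forall k, hnorm (a k) <= K * r ^+ k) ->
  exists2 l, hcvg (fun N => \sum_(k < N) a k) l & hnorm l <= K / (1 - r).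
Proof.
move=> r0 r1 a_le; have r1' : 0 < 1 - r by rewrite subr_gt0.
have K0 : 0 <= K by have := a_le 0%N; rewrite expr0 mulr1; apply: le_trans; exact: hnorm_ge0.
have tail n m : (n <= m)%N -> hnorm (\sum_(k < m) a k - \sum_(k < n) a k) <= K * (r ^+ n / (1 - r)).
  move=> nm; rewrite -!(big_mkord xpredT) (big_cat_nat (leq0n n) nm) /= addrC addrK.
  apply: le_trans (hnorm_sum _ _ _ _) _; apply: le_trans (ler_sum _ (fun k _ => a_le k)) _.
  by rewrite -mulr_sumr ler_wpM2l ?geometric_tail_le.
have [l a_l] : exists l, hcvg (fun N => \sum_(k < N) a k) l.
  apply: hcauchy_cvg => e e0.
  have [N hN] := expr_eventually_lt r0 r1 (divr_gt0 (mulr_gt0 e0 r1') (ltr_wpDl K0 ltr01)).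
  have near n m : (N <= n)%N -> (n <= m)%N ->
      hnorm (\sum_(k < m) a k - \sum_(k < n) a k) < e.
    move=> Nn nm; apply: le_lt_trans (tail n m nm) _.
    move: (hN n Nn); rewrite ltr_pdivlMr ?ltr_wpDl // mulrA ltr_pdivrMr // => rn.
    by apply: le_lt_trans rn; rewrite mulrC ler_wpM2l ?exprn_ge0 ?lerDl.
  exists N => m n Nm Nn; have [nm|mn] := leqP n m; first exact: near.
  by rewrite hnormBC; apply: near => //; apply: ltnW.
exists l => //; apply: (hcvg_hnorm_le a_l) => N.
apply: le_trans (hnorm_sum _ _ _ _) _.
apply: le_trans (ler_sum _ (fun (k : 'I_N) _ => a_le k)) _.
by rewrite -mulr_sumr ler_wpM2l ?geometric_sum_le.
Qed.

(* if the first [m] coefficients vanish, the [m]-th one dominates the tail for small [t] *)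
Lemma power_series_lowest_coef_le (a : nat -> V) (K t : R) m :
  (forall k, (k < m)%N -> a k = 0) -> (forall k, hnorm (a k) <= K) ->
  0 < t -> t <= 2%:R^-1 -> hcvg (fun N => \sum_(k < N) (t ^+ k)%:C *: a k) 0 ->
  hnorm (a m) <= 2%:R * K * t.
Proof.
move=> a_lt a_le t0 t2 a_cvg.
have K0 : 0 <= K by apply: le_trans (a_le 0%N); exact: hnorm_ge0.
have t1 : 0 < 1 - t by rewrite subr_gt0; apply: le_lt_trans t2 _; rewrite invf_lt1 ?ltr0n ?ltr1n.
have tm0 : 0 < t ^+ m := exprn_gt0 m t0.
have t0' : 0 <= t := ltW t0.
suff : t ^+ m * hnorm (a m) <= t ^+ m * (2%:R * K * t) by rewrite ler_pM2l.
apply/ler_addgt0Pr => e e0; have [N0 hN0] := a_cvg e e0.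
set N := maxn N0 m.+1; have := hN0 N (leq_maxl _ _); rewrite subr0.
rewrite -(big_mkord xpredT (fun k => (t ^+ k)%:C *: a k)).
rewrite (big_cat_nat (leq0n m) (_ : (m <= N)%N)); last first.
  by apply: leq_trans (leq_maxr _ _); apply: leqnSn.
rewrite big1_seq /= => [|k]; last by rewrite mem_index_iota => /andP[_ km]; rewrite a_lt ?scaler0.
rewrite add0r (big_cat_nat (leqnSn m) (leq_maxr _ _ : (m.+1 <= N)%N)) /= big_nat1.
set T := \sum_(m.+1 <= i < N) _ => hS.
have am : hnorm ((t ^+ m)%:C *: a m) = t ^+ m * hnorm (a m).
  by rewrite hnormZ cmodR ger0_norm // ltW.
have hT : hnorm T <= K * (t ^+ m.+1 / (1 - t)).
  apply: le_trans (hnorm_sum _ _ _ _) _.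
  apply: le_trans (_ : _ <= \sum_(m.+1 <= i < N) K * t ^+ i) _.
    apply: ler_sum => i _; rewrite hnormZ cmodR ger0_norm ?exprn_ge0 // mulrC.
    by rewrite ler_wpM2r ?exprn_ge0.
  by rewrite -mulr_sumr ler_wpM2l ?geometric_tail_le //; lra.
have hK : K * (t ^+ m.+1 / (1 - t)) <= t ^+ m * (2%:R * K * t).
  rewrite exprSr mulrA ler_pdivrMr //.
  have : 2%:R * t <= 1 by rewrite -ler_pdivlMl ?ltr0n // mulr1.
  have : 0 <= K * t ^+ m * t by rewrite !mulr_ge0 ?exprn_ge0.
  by nra.
have := hnormD H ((t ^+ m)%:C *: a m + T) (- T); rewrite addrK hnormN am.
by lra.
Qed.

Lemma power_series_eq0 (a : nat -> V) (K r : R) : 0 < r -> (forall k, hnorm (a k) <= K) ->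
  (forall t : R, 0 < t -> t < r -> hcvg (fun N => \sum_(k < N) (t ^+ k)%:C *: a k) 0) ->
  forall k, a k = 0.
Proof.
move=> r0 a_le a_cvg; elim/ltn_ind => m IH.
have K0 : 0 <= K by apply: le_trans (a_le 0%N); exact: hnorm_ge0.
apply: (@hnorm_le_eq0 _ _ H) => e e0.
have K1 : 0 < 2%:R * K + 1 by rewrite ltr_wpDl // mulr_ge0.
set t := Num.min (Num.min (r / 2%:R) 2%:R^-1) (e / (2%:R * K + 1)).
have t0 : 0 < t by rewrite !lt_min !divr_gt0 ?ltr0n // invr_gt0 ltr0n.
have tr : t < r.
  apply: le_lt_trans (_ : t <= r / 2%:R) _; first by rewrite !ge_min lexx.
  by rewrite ltr_pdivrMr ?ltr0n //; lra.
have t2 : t <= 2%:R^-1 by rewrite !ge_min lexx orbT.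
have te : t <= e / (2%:R * K + 1) by rewrite !ge_min lexx orbT.
apply: le_trans (power_series_lowest_coef_le IH a_le t0 t2 (a_cvg t t0 tr)) _.
apply: le_trans (_ : _ <= 2%:R * K * (e / (2%:R * K + 1))) _.
  by rewrite ler_wpM2l // mulr_ge0.
by rewrite mulrA ler_pdivrMr //; nra.
Qed.

End PowerSeries.

(** * Transfer functions and the outputs of the pencil *)

Section RealSums.
Variable R : realType.

Lemma cauchy_schwarz_sum (I : finType) (u w : I -> R) :
  \sum_i u i * w i <= Num.sqrt (\sum_i u i ^+ 2) * Num.sqrt (\sum_i w i ^+ 2).
Proof.
set a := \sum_i u i ^+ 2; set b := \sum_i w i ^+ 2.
have a0 : 0 <= a by rewrite sumr_ge0 // => i _; rewrite sqr_ge0.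
have b0 : 0 <= b by rewrite sumr_ge0 // => i _; rewrite sqr_ge0.
have sqr_sum0 (v : I -> R) : \sum_i v i ^+ 2 = 0 -> forall i, v i = 0.
  move=> v0 i; apply/eqP; rewrite -sqrf_eq0; apply/eqP.
  by apply: (psumr_eq0P _ v0) => // j _; rewrite sqr_ge0.
have [a_eq0|a_neq0] := eqVneq a 0.
  by rewrite big1 ?mulr_ge0 ?sqrtr_ge0 // => i _; rewrite (sqr_sum0 u a_eq0) mul0r.
have [b_eq0|b_neq0] := eqVneq b 0.
  by rewrite big1 ?mulr_ge0 ?sqrtr_ge0 // => i _; rewrite (sqr_sum0 w b_eq0) mulr0.
set sa := Num.sqrt a; set sb := Num.sqrt b.
have sa0 : 0 < sa by rewrite sqrtr_gt0 lt_def a_neq0.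
have sb0 : 0 < sb by rewrite sqrtr_gt0 lt_def b_neq0.
have sab : 0 < 2%:R * sa * sb by rewrite !mulr_gt0 ?ltr0n.
(* AM-GM termwise: [2 sa sb u w <= sb^2 u^2 + sa^2 w^2] *)
have : \sum_i 2%:R * sa * sb * (u i * w i) <= \sum_i (sb ^+ 2 * u i ^+ 2 + sa ^+ 2 * w i ^+ 2).
  by apply: ler_sum => i _; have := sqr_ge0 (sb * u i - sa * w i); nra.
have sa2 : sa ^+ 2 = a by rewrite sqr_sqrtr.
have sb2 : sb ^+ 2 = b by rewrite sqr_sqrtr.
rewrite -mulr_sumr big_split /= -!mulr_sumr -/a -/b sa2 sb2 => sum_le.
rewrite -(ler_pM2l sab).
have : 2%:R * sa * sb * (sa * sb) = b * a + a * b by rewrite -sa2 -sb2; ring.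
lra.
Qed.

Lemma sqrtrX (a : R) k : 0 <= a -> Num.sqrt (a ^+ k) = Num.sqrt a ^+ k.
Proof.
move=> a0; rewrite -{1}(sqr_sqrtr a0) -exprM mulnC exprM sqrtr_sqr ger0_norm //.
by rewrite exprn_ge0 ?sqrtr_ge0.
Qed.

Lemma sum_tuple_prod d (f : 'I_d -> R) k :
  \sum_(v : k.-tuple 'I_d) \prod_(i <- v) f i = (\sum_(j < d) f j) ^+ k.
Proof.
elim: k => [|k IH]; first by rewrite big_tuple0 big_nil expr0.
rewrite big_tuple_cons exprS mulr_suml; apply: eq_bigr => j _.
by rewrite -IH mulr_sumr; apply: eq_bigr => w _; rewrite big_cons.
Qed.

End RealSums.

Definition ball_sqnorm (R : realType) d (l : 'I_d -> R[i]) := \sum_(j < d) cmod (l j) ^+ 2.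

Section OutputBound.
Variables (R : realType) (d : nat) (X Y : lmodType R[i]) (HX : hilbert X) (HY : hilbert Y).
Variables (Cop : X -> Y) (A : 'I_d -> X -> X).
Hypotheses (bC : bounded_op HX HY Cop) (bA : forall j, bounded_op HX HX (A j)).
Hypothesis os : output_stable HX HY Cop A.

Lemma ball_sqnorm_ge0 (l : 'I_d -> R[i]) : 0 <= ball_sqnorm l.
Proof. by rewrite sumr_ge0 // => j _; rewrite sqr_ge0. Qed.

Lemma in_ballE (l : 'I_d -> R[i]) : in_ball l = (ball_sqnorm l < 1).
Proof.
rewrite /in_ball (eq_bigr (fun j => (cmod (l j) ^+ 2)%:C)) => [|j _].
  by rewrite -rmorph_sum ltcR.
by rewrite cmodE rmorphXn.
Qed.

(* Cauchy-Schwarz over the words of length k, then output stability *)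
Lemma pencil_output_bound : exists2 K : R, 0 <= K &
  forall l x k,
    hnorm HY (Cop (pencil_pow A l k x)) <= K * hnorm HX x * Num.sqrt (ball_sqnorm l) ^+ k.
Proof.
have [M hM] := os; exists (Num.sqrt `|M|) => [|l x k]; first exact: sqrtr_ge0.
have words_le : \sum_(v : k.-tuple 'I_d) hnorm HY (Cop (apply_word A v x)) ^+ 2
    <= `|M| * hnorm HX x ^+ 2.
  have := hM x k.+1; rewrite big_ord_recr /=.
  have : 0 <= \sum_(i < k) \sum_(v : i.-tuple 'I_d) hnorm HY (Cop (apply_word A v x)) ^+ 2.
    by rewrite !sumr_ge0 // => i _; rewrite sumr_ge0 // => v _; rewrite sqr_ge0.
  have : M * hnorm HX x ^+ 2 <= `|M| * hnorm HX x ^+ 2 by rewrite ler_wpM2r ?sqr_ge0 ?ler_norm.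
  lra.
rewrite (pencil_pow_words (fun j => (bA j).1)) (is_linear_sum bC.1).
apply: le_trans (hnorm_sum _ _ _ _) _.
apply: le_trans (_ : _ <= \sum_(v : k.-tuple 'I_d)
    cmod (\prod_(i <- v) l i) * hnorm HY (Cop (apply_word A v x))) _.
  by apply: ler_sum => v _; rewrite (is_linearZ bC.1) hnormZ.
apply: le_trans (cauchy_schwarz_sum _ _) _.
have cmod_prod (v : seq 'I_d) : cmod (\prod_(i <- v) l i) = \prod_(i <- v) cmod (l i).
  by rewrite (big_morph _ (@cmodM R) (cmod_nat R 1)).
under eq_bigr do rewrite cmod_prod -prodrXl.
rewrite sum_tuple_prod sqrtrX ?ball_sqnorm_ge0 // mulrC ler_wpM2r ?exprn_ge0 ?sqrtr_ge0 //.
apply: le_trans (_ : _ <= Num.sqrt (`|M| * hnorm HX x ^+ 2)) _.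
  by rewrite ler_sqrt // mulr_ge0 ?sqr_ge0.
by rewrite sqrtrM ?normr_ge0 // sqrtr_sqr (ger0_norm (hnorm_ge0 HX x)).
Qed.

End OutputBound.

Lemma in_ball0 (R : realType) d : in_ball (fun _ : 'I_d => 0 : R[i]).
Proof. by rewrite in_ballE /ball_sqnorm big1 ?ltr01 // => j _; rewrite cmod0 expr0n. Qed.

Section TransferFunction.
Variables (R : realType) (d : nat) (X Y : lmodType R[i]) (HX : hilbert X) (HY : hilbert Y).
Variables (Cop : X -> Y) (A : 'I_d -> X -> X).
Hypotheses (bC : bounded_op HX HY Cop) (bA : forall j, bounded_op HX HX (A j)).
Hypotheses (os : output_stable HX HY Cop A) (cA : commutative_tuple A).

Lemma is_E_pencil E : is_E HY Cop A E -> forall l, in_ball l -> forall x,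
  hconverges HY (fun N => \sum_(k < N) Cop (pencil_pow A l k x)) (E l x).
Proof.
move=> isE l l_ball x; apply: hcvg_eq (isE l l_ball x) => N.
by apply: eq_bigr => k _; rewrite E_hom_pencil_pow // => [j|]; [exact: (bA j).1 | exact: bC.1].
Qed.

Lemma is_E_at0 E : is_E HY Cop A E -> forall x, E (fun=> 0) x = Cop x.
Proof.
move=> isE x; apply: hcvg_unique (is_E_pencil isE (in_ball0 R d) x) _.
apply: (@hcvg_near_cst _ _ _ _ _ 1%N) => -[//|N] _.
rewrite big_ord_recl big1 ?addr0 // => k _.
by rewrite /pencil_pow iterS pencil0 (is_linear0 bC.1).
Qed.

Lemma transfer_function_exists : exists E : ('I_d -> R[i]) -> X -> Y,
  is_E HY Cop A E /\ forall l, in_ball l -> bounded_op HX HY (E l).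
Proof.
have [K K0 hK] := pencil_output_bound bC bA os.
have sum_cvg l x : in_ball l -> exists2 y,
    hconverges HY (fun N => \sum_(k < N) Cop (pencil_pow A l k x)) y &
    hnorm HY y <= K * hnorm HX x / (1 - Num.sqrt (ball_sqnorm l)).
  rewrite in_ballE => l_ball; apply: hseries_geometric_cvg (hK l x); first exact: sqrtr_ge0.
  by rewrite -sqrtr1 ltr_sqrt.
have /choice[E hE] : forall p : ('I_d -> R[i]) * X, exists y, in_ball p.1 ->
    hconverges HY (fun N => \sum_(k < N) Cop (pencil_pow A p.1 k p.2)) y.
  move=> [l x] /=; have [l_ball|] := boolP (in_ball l); last by exists 0.
  by have [y ? _] := sum_cvg l x l_ball; exists y.
have linC := bC.1; have linA j := (bA j).1.
exists (fun l x => E (l, x)); split=> [l l_ball x|l l_ball].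
  by apply: hcvg_eq (hE (l, x) l_ball) => N; apply: eq_bigr => k _; rewrite E_hom_pencil_pow.
split=> [a x x'|]; last first.
  exists (K / (1 - Num.sqrt (ball_sqnorm l))) => x; have [y hy y_le] := sum_cvg l x l_ball.
  by rewrite (hcvg_unique (hE (l, x) l_ball) hy) mulrAC.
apply: hcvg_unique (hE (l, a *: x + x') l_ball) _.
apply: hcvg_eq (hcvgD (hcvgZ a (hE (l, x) l_ball)) (hE (l, x') l_ball)) => N /=.
rewrite scaler_sumr -big_split; apply: eq_bigr => k _ /=.
by rewrite pencil_pow_linear // linC.
Qed.

End TransferFunction.

Section ShiftExpansion.
Variables (R : realType) (d : nat) (X : lmodType R[i]) (A : 'I_d -> X -> X).
Hypotheses (linA : forall j, is_linear (A j)) (cA : commutative_tuple A).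
Variables (mu : 'I_d -> R[i]) (j : 'I_d).

(* [shift_coef x m i] is the coefficient of [s ^+ i] in [pencil_pow A (mu + s e_j) m x];
   the recursion expands [pencil (mu + s e_j) = pencil mu + s A_j] *)
Fixpoint shift_coef (x : X) (m : nat) : nat -> X :=
  match m with
  | 0 => fun i => if i == 0%N then x else 0
  | m'.+1 => fun i =>
      pencil A mu (shift_coef x m' i) + (if i is i'.+1 then A j (shift_coef x m' i') else 0)
  end.

Lemma shift_coef_gt x m i : (m < i)%N -> shift_coef x m i = 0.
Proof.
elim: m i => [|m IH] [|i] //= mi.
rewrite !IH //; last exact: ltnW.
by rewrite (is_linear0 (pencil_linear linA mu)) (is_linear0 (linA j)) addr0.
Qed.

Lemma shift_coef1 x m : shift_coef x m 1 = m%:R *: pencil_pow A mu m.-1 (A j x).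
Proof.
have coef0 m' : shift_coef x m' 0 = pencil_pow A mu m' x by elim: m' => //= m' ->; rewrite addr0.
elim: m => [|m IH]; first by rewrite /= scale0r.
rewrite /= IH coef0 (A_pencil_pow_comm linA cA) (is_linearZ (pencil_linear linA mu)).
case: m {IH} => [|m]; first by rewrite !scale0r add0r scale1r.
by rewrite /pencil_pow /= -!/(pencil_pow A mu m _) -[in RHS](addn1 m.+1) natrD scalerDl scale1r.
Qed.

Lemma pencil_pow_shift x m N (s : R[i]) : (m < N)%N ->
  pencil_pow A (fun i => mu i + (i == j)%:R * s) m x = \sum_(i < N) s ^+ i *: shift_coef x m i.
Proof.
elim: m N => [|m IH] [|N] //= mN.
  by rewrite big_ord_recl /= expr0 scale1r big1 ?addr0 // => i _; rewrite scaler0.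
rewrite -/(pencil_pow _ _ m x) pencil_shift //.
under eq_bigr do rewrite scalerDr.
rewrite big_split /=; congr (_ + _).
  rewrite (IH N.+1 (ltnW mN)) (is_linear_sum (pencil_linear linA mu)).
  by apply: eq_bigr => i _; rewrite (is_linearZ (pencil_linear linA mu)).
rewrite big_ord_recl /= scaler0 add0r (IH N mN) (is_linear_sum (linA j)) scaler_sumr.
by apply: eq_bigr => i _; rewrite (is_linearZ (linA j)) scalerA exprS.
Qed.

End ShiftExpansion.

Lemma in_ball_shift (R : realType) d (mu : 'I_d -> R[i]) j : in_ball mu -> exists2 r : R, 0 < r &
  forall s : R, 0 < s -> s < r -> in_ball (fun i => mu i + (i == j)%:R * s%:C).
Proof.
rewrite in_ballE => mu_ball; have r0 := ball_sqnorm_ge0 mu.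
exists (Num.min 1 ((1 - ball_sqnorm mu) / 4%:R)).
  by rewrite lt_min ltr01 divr_gt0 ?ltr0n // subr_gt0.
move=> s s0; rewrite lt_min => /andP[s1]; rewrite ltr_pdivlMr ?ltr0n // => s_small.
rewrite in_ballE /ball_sqnorm (bigD1 j) //= eqxx mul1r.
rewrite (eq_bigr (fun i => cmod (mu i) ^+ 2)) => [|i /negbTE ->]; last by rewrite mul0r addr0.
move: s_small; rewrite /ball_sqnorm (bigD1 j) //=.
set S := \sum_(i < d | i != j) _; have S0 : 0 <= S by rewrite sumr_ge0 // => i _; rewrite sqr_ge0.
have c0 := cmod_ge0 (mu j + s%:C); have cm0 := cmod_ge0 (mu j).
have : cmod (mu j + s%:C) <= cmod (mu j) + s.
  by apply: le_trans (cmodD _ _) _; rewrite cmodR ger0_norm // ltW.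
move=> c_le s_small.
have : cmod (mu j + s%:C) ^+ 2 <= (cmod (mu j) + s) ^+ 2.
  by rewrite lerXn2r ?nnegrE // addr_ge0 // ltW.
have : cmod (mu j) <= 1 by move: mu_ball; rewrite /ball_sqnorm (bigD1 j) //= -/S; nra.
by nra.
Qed.

Section SameOutputs.
Variables (R : realType) (d : nat) (X Xt Y : lmodType R[i]) (HY : hilbert Y).
Variables (Cop : X -> Y) (A : 'I_d -> X -> X) (Ct : Xt -> Y) (At : 'I_d -> Xt -> Xt).
Hypotheses (linC : is_linear Cop) (linA : forall j, is_linear (A j)) (cA : commutative_tuple A).
Hypotheses (linCt : is_linear Ct) (linAt : forall j, is_linear (At j)) (cAt : commutative_tuple At).

Definition same_outputs x xt := forall mu, in_ball mu -> forall k,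
  Cop (pencil_pow A mu k x) = Ct (pencil_pow At mu k xt).

(* the difference of the outputs along [mu + s e_j] is a polynomial in [s] vanishing
   near [0]; its coefficient of [s] is the difference for [A_j x] and [At_j xt] *)
Lemma same_outputsA x xt : same_outputs x xt -> forall j, same_outputs (A j x) (At j xt).
Proof.
move=> xxt j mu mu_ball k; have [r r0 r_ball] := in_ball_shift j mu_ball.
pose a i := Cop (shift_coef A mu j x k.+1 i) - Ct (shift_coef At mu j xt k.+1 i).
have a_gt i : (k.+1 < i)%N -> a i = 0.
  by move=> ki; rewrite /a !shift_coef_gt // (is_linear0 linC) (is_linear0 linCt) subrr.
have a_le i : hnorm HY (a i) <= \sum_(i' < k.+2) hnorm HY (a i').
  have [ik|ki] := ltnP i k.+2; last by rewrite a_gt // hnorm0 sumr_ge0 // => i' _; exact: hnorm_ge0.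
  by rewrite (bigD1 (Ordinal ik)) //= lerDl sumr_ge0 // => i' _; exact: hnorm_ge0.
have /eqP : a 1%N = 0.
  apply: (power_series_eq0 r0 a_le) => t t0 tr; apply: (@hcvg_near_cst _ _ _ _ _ k.+2) => N kN.
  have lin_sum (V : lmodType R[i]) (T : V -> Y) (F : nat -> V) : is_linear T ->
      \sum_(i < N) (t ^+ i)%:C *: T (F i) = T (\sum_(i < N) t%:C ^+ i *: F i).
    move=> linT; rewrite (is_linear_sum linT).
    by apply: eq_bigr => i _; rewrite (is_linearZ linT) rmorphXn.
  under eq_bigr do rewrite scalerBr.
  rewrite sumrB !lin_sum // -!pencil_pow_shift //.
  by rewrite xxt ?subrr // r_ball.
rewrite /a !shift_coef1 // (is_linearZ linC) (is_linearZ linCt) -scalerBr scaler_eq0.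
by rewrite pnatr_eq0 /= subr_eq0 => /eqP.
Qed.

Lemma same_outputs_words x xt : same_outputs x xt ->
  forall v, Cop (apply_word A v x) = Ct (apply_word At v xt).
Proof.
move=> xxt v; suff : same_outputs (apply_word A v x) (apply_word At v xt).
  by move=> /(_ _ (in_ball0 R d) 0%N).
by elim: v => [|j v IH] //=; exact: same_outputsA.
Qed.

End SameOutputs.

Section OutputsFromTransferFunctions.
Variables (R : realType) (d : nat) (X Xt Y : lmodType R[i]).
Variables (HX : hilbert X) (HXt : hilbert Xt) (HY : hilbert Y).
Variables (Cop : X -> Y) (A : 'I_d -> X -> X) (Ct : Xt -> Y) (At : 'I_d -> Xt -> Xt).
Hypotheses (bC : bounded_op HX HY Cop) (bA : forall j, bounded_op HX HX (A j)).
Hypotheses (os : output_stable HX HY Cop A) (cA : commutative_tuple A).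
Hypotheses (bCt : bounded_op HXt HY Ct) (bAt : forall j, bounded_op HXt HXt (At j)).
Hypotheses (ost : output_stable HXt HY Ct At) (cAt : commutative_tuple At).

(* [E (t mu) x - Et (t mu) xt] is a power series in [t] with bounded coefficients *)
Lemma same_outputs_of_E E Et x xt : is_E HY Cop A E -> is_E HY Ct At Et ->
  (forall l, in_ball l -> E l x = Et l xt) -> same_outputs Cop A Ct At x xt.
Proof.
move=> isE isEt EEt mu mu_ball k.
have [K K0 hK] := pencil_output_bound bC bA os.
have [Kt Kt0 hKt] := pencil_output_bound bCt bAt ost.
pose a i := Cop (pencil_pow A mu i x) - Ct (pencil_pow At mu i xt).
have r1 : Num.sqrt (ball_sqnorm mu) <= 1.
  by rewrite -sqrtr1 ler_sqrt // ltW // -in_ballE.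
have a_le i : hnorm HY (a i) <= K * hnorm HX x + Kt * hnorm HXt xt.
  apply: le_trans (hnormD _ _ _) _; rewrite hnormN.
  have ri : Num.sqrt (ball_sqnorm mu) ^+ i <= 1 by rewrite exprn_ile1 ?sqrtr_ge0.
  have := hK mu x i; have := hKt mu xt i.
  have : K * hnorm HX x * Num.sqrt (ball_sqnorm mu) ^+ i <= K * hnorm HX x.
    by rewrite ler_piMr ?mulr_ge0 ?hnorm_ge0 ?exprn_ge0 ?sqrtr_ge0.
  have : Kt * hnorm HXt xt * Num.sqrt (ball_sqnorm mu) ^+ i <= Kt * hnorm HXt xt.
    by rewrite ler_piMr ?mulr_ge0 ?hnorm_ge0 ?exprn_ge0 ?sqrtr_ge0.
  lra.
apply/eqP; rewrite -subr_eq0 -/(a k); apply/eqP; move: k.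
apply: (power_series_eq0 ltr01 a_le) => t t0 t1.
have t_ball : in_ball (fun j => t%:C * mu j).
  rewrite in_ballE /ball_sqnorm.
  under eq_bigr do rewrite cmodM cmodR ger0_norm ?(ltW t0) // exprMn.
  rewrite -mulr_sumr; have := ball_sqnorm_ge0 mu; move: mu_ball; rewrite in_ballE.
  have : t ^+ 2 < 1 by rewrite expr_lt1 // ltW.
  by rewrite /ball_sqnorm; nra.
have := hcvgB (is_E_pencil bC bA cA isE t_ball x) (is_E_pencil bCt bAt cAt isEt t_ball xt).
rewrite EEt // subrr; apply: hcvg_eq => N; rewrite -sumrB; apply: eq_bigr => i _.
have linA j := (bA j).1; have linAt j := (bAt j).1.
rewrite (pencil_powZ linA) (pencil_powZ linAt) (is_linearZ bC.1) (is_linearZ bCt.1).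
by rewrite -scalerBr rmorphXn.
Qed.

End OutputsFromTransferFunctions.

Section Observability.
Variables (R : realType) (d : nat) (X Y : lmodType R[i]) (HX : hilbert X) (HY : hilbert Y).
Variables (Cop : X -> Y) (A : 'I_d -> X -> X).
Hypotheses (bC : bounded_op HX HY Cop) (bA : forall j, bounded_op HX HX (A j)).
Hypotheses (os : output_stable HX HY Cop A) (obs : observable Cop A) (cA : commutative_tuple A).

Lemma observable_same_outputs0 x : same_outputs Cop A Cop A x 0 -> x = 0.
Proof.
have linA j := (bA j).1.
move=> x0; apply: obs => v; rewrite (same_outputs_words HY bC.1 linA cA bC.1 linA cA x0).
by rewrite (is_linear0 (is_linear_apply_word linA v)) (is_linear0 bC.1).
Qed.

Lemma adjoint_family_total E (S : ('I_d -> R[i]) -> Y -> X) : is_E HY Cop A E ->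
  (forall l, in_ball l -> bounded_op HX HY (E l)) ->
  (forall l, in_ball l -> is_adjoint HX HY (E l) (S l)) ->
  total_family HX (fun p : {l | in_ball l} * Y => S (val p.1) p.2).
Proof.
move=> isE bE adjS x x_perp; apply: observable_same_outputs0.
apply: (same_outputs_of_E bC bA os cA bC bA os cA isE isE) => l l_ball.
rewrite (is_linear0 (bE l l_ball).1); apply: (@inner_eq0 _ _ HY).
by rewrite adjS // (x_perp (exist _ l l_ball, E l x)).
Qed.

End Observability.

Lemma same_outputs_intertwining (R : realType) d (X Xt Y : lmodType R[i]) (HXt : hilbert Xt)
  (HY : hilbert Y) (Cop : X -> Y) (A : 'I_d -> X -> X) (Ct : Xt -> Y) (At : 'I_d -> Xt -> Xt)
  (U : X -> Xt) :
  is_linear Cop -> (forall j, is_linear (A j)) -> commutative_tuple A ->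
  bounded_op HXt HY Ct -> (forall j, bounded_op HXt HXt (At j)) -> commutative_tuple At ->
  observable Ct At -> is_linear U -> (forall x, same_outputs Cop A Ct At x (U x)) ->
  forall j x, U (A j x) = At j (U x).
Proof.
move=> linC linA cA bCt bAt cAt obst linU xUx j x; have linAt j' := (bAt j').1.
apply/eqP; rewrite -subr_eq0; apply/eqP/(observable_same_outputs0 bCt bAt obst cAt).
move=> mu mu_ball k; have linP := pencil_pow_linear linAt mu k.
rewrite (is_linearB linP) (is_linearB bCt.1) (is_linear0 linP) (is_linear0 bCt.1).
rewrite -(xUx _ mu mu_ball k) -(same_outputsA HY linC linA cA bCt.1 linAt cAt (xUx x) j mu_ball k).
by rewrite subrr.
Qed.

Theorem theorem3p17 (R : realType) (d : nat)
  (X Xt Y : lmodType R[i]) (HX : hilbert X) (HXt : hilbert Xt) (HY : hilbert Y)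
  (Cop : X -> Y) (A : 'I_d -> X -> X) (Ct : Xt -> Y) (At : 'I_d -> Xt -> Xt) :
  bounded_op HX HY Cop -> (forall j, bounded_op HX HX (A j)) ->
  bounded_op HXt HY Ct -> (forall j, bounded_op HXt HXt (At j)) ->
  output_stable HX HY Cop A -> observable Cop A -> commutative_tuple A ->
  output_stable HXt HY Ct At -> observable Ct At -> commutative_tuple At ->
  (* K^a_{C,A}(lambda,zeta) = K^a_{Ct,At}(lambda,zeta) on B^d x B^d *)
  (forall (E : ('I_d -> R[i]) -> X -> Y) (Et : ('I_d -> R[i]) -> Xt -> Y),
     is_E HY Cop A E -> is_E HY Ct At Et ->
     forall lam zeta : 'I_d -> R[i], in_ball lam -> in_ball zeta ->
     forall (S : Y -> X) (St : Y -> Xt),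
       is_adjoint HX HY (E zeta) S -> is_adjoint HXt HY (Et zeta) St ->
       forall y : Y, E lam (S y) = Et lam (St y)) ->
  exists (U : X -> Xt) (Ui : Xt -> X),
    [/\ is_linear U, cancel U Ui, cancel Ui U,
        (forall x x', inner HXt (U x) (U x') = inner HX x x') &
        ((forall x, Cop x = Ct (U x)) /\
         (forall j x, A j x = Ui (At j (U x))))].
Proof.
move=> bC bA bCt bAt os obs cA ost obst cAt K_eq.
have [E [isE bE]] := transfer_function_exists bC bA os cA.
have [Et [isEt bEt]] := transfer_function_exists bCt bAt ost cAt.
have [S adjS] := adjoints_exist bE.
have [St adjSt] := adjoints_exist bEt.
pose g (p : {l | in_ball l} * Y) := S (val p.1) p.2.
pose gt (p : {l | in_ball l} * Y) := St (val p.1) p.2.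
have K_eq' l p : in_ball l -> E l (g p) = Et l (gt p).
  case: p => [[z z_ball] y] l_ball.
  exact: K_eq isE isEt _ _ l_ball z_ball _ _ (adjS z z_ball) (adjSt z z_ball) y.
have gram p q : inner HX (g p) (g q) = inner HXt (gt p) (gt q).
  by case: q => [[z z_ball] y]; rewrite /g /= -adjS // -adjSt // K_eq'.
have g_total := adjoint_family_total bC bA os obs cA isE bE adjS.
have gt_total := adjoint_family_total bCt bAt ost obst cAt isEt bEt adjSt.
have [U [Ui [linU UK UiK isoU Ug]]] := gram_unitary_exists gram g_total gt_total.
have EU l : in_ball l -> E l =1 Et l \o U.
  move=> l_ball; have bEtU := bounded_op_comp (bEt l l_ball) (isometry_bounded linU isoU).
  by apply: (bounded_op_total_eq g_total (bE l l_ball) bEtU) => p; rewrite /= Ug K_eq'.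
have xUx x : same_outputs Cop A Ct At x (U x).
  by apply: (same_outputs_of_E bC bA os cA bCt bAt ost cAt isE isEt) => l /EU.
exists U, Ui; split=> //; split=> [x | j x].
  by rewrite -(is_E_at0 bC bA cA isE) -(is_E_at0 bCt bAt cAt isEt) (EU _ (in_ball0 R d)).
have linA j' := (bA j').1.
by rewrite -(same_outputs_intertwining bC.1 linA cA bCt bAt cAt obst linU xUx) UK.
Qed.
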